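(* Let $\gamma_a,\gamma_s>0$, $\sigma_B>0$, $q>0$, let $\beta_s$ be the piecewise linear coalbedo described in the context, and fix $\lambda\ge0$. For $\varepsilon_a\in(0,2)$ consider the system \[ \gamma_a T_a'=-\lambda(T_a-T_s)+\varepsilon_a\sigma_B|T_s|^3T_s-2\varepsilon_a\sigma_B|T_a|^3T_a,\qquad \gamma_s T_s'=-\lambda(T_s-T_a)-\sigma_B|T_s|^3T_s+\varepsilon_a\sigma_B|T_a|^3T_a+q\beta_s(T_s). \] Let $\varepsilon_a^*\in(0,2)$ and let $(T_a^{eq,\varepsilon_a^*},T_s^{eq,\varepsilon_a^*})$ be a warm [respectively cold] equilibrium point of the system with $\varepsilon_a=\varepsilon_a^*$, in the sense that $T_s^{eq,\varepsilon_a^*}\notin[T_{s,-},T_{s,+}]$. Then for $\varepsilon_a$ close to $\varepsilon_a^*$ there exists a unique warm [respectively cold] equilibrium point $(T_a^{eq,\varepsilon_a},T_s^{eq,\varepsilon_a})$ of the system with parameter $\varepsilon_a$; this equilibrium is asymptotically exponentially stable; the maps $\varepsilon_a\mapsto T_s^{eq,\varepsilon_a}$ and $\varepsilon_a\mapsto T_a^{eq,\varepsilon_a}$ are locally analytic; locally, $\varepsilon_a\mapsto T_s^{eq,\varepsilon_a}$ is increasing; and, if $\varepsilon_a^*\in(1,2)$, locally $\varepsilon_a\mapsto T_a^{eq,\varepsilon_a}$ is increasing.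
   Context: The coalbedo is $\beta_s(T)=\beta_{s,-}$ for $T\le T_{s,-}$, $\beta_s(T)=\beta_{s,-}+(\beta_{s,+}-\beta_{s,-})\frac{T-T_{s,-}}{T_{s,+}-T_{s,-}}$ for $T\in[T_{s,-},T_{s,+}]$, and $\beta_s(T)=\beta_{s,+}$ for $T\ge T_{s,+}$, where $T_{s,+}>T_{s,-}>0$ and $\beta_{s,+}>\beta_{s,-}>0$. An equilibrium point is a point $(T_a,T_s)$ with nonnegative components where both right-hand sides vanish; it is warm if $T_s>T_{s,+}$ and cold if $T_s<T_{s,-}$. *)

From Stdlib Require Import Reals Lra.
From Coquelicot Require Import Coquelicot.
Open Scope R_scope.

Definition coalbedo (Tsm Tsp bm bp T : R) : R :=
  if Rle_dec T Tsm then bm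
  else if Rle_dec Tsp T then bp
  else bm + (bp - bm) * (T - Tsm) / (Tsp - Tsm).

Definition p4 (x : R) : R := Rabs x ^ 3 * x.

(* right-hand side of the T_a equation (without the factor 1/gamma_a) *)
Definition Fa (lam sig eps Ta Ts : R) : R :=
  - lam * (Ta - Ts) + eps * sig * p4 Ts - 2 * eps * sig * p4 Ta.

(* right-hand side of the T_s equation (without the factor 1/gamma_s) *)
Definition Fs (lam sig q : R) (beta : R -> R) (eps Ta Ts : R) : R :=
  - lam * (Ts - Ta) - sig * p4 Ts + eps * sig * p4 Ta + q * beta Ts.

Definition is_equilibrium (lam sig q : R) (beta : R -> R) (eps Ta Ts : R) : Prop :=
  0 <= Ta /\ 0 <= Ts /\ Fa lam sig eps Ta Ts = 0 /\ Fs lam sig q beta eps Ta Ts = 0.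

Definition regime (w : bool) (Tsm Tsp Ts : R) : Prop :=
  if w then Tsp < Ts else Ts < Tsm.

Definition is_solution (ga gs lam sig q : R) (beta : R -> R) (eps T : R)
  (xa xs : R -> R) : Prop :=
  (forall t, 0 <= t < T -> continuous xa t /\ continuous xs t) /\
  (forall t, 0 < t < T ->
     is_derive xa t (/ ga * Fa lam sig eps (xa t) (xs t)) /\
     is_derive xs t (/ gs * Fs lam sig q beta eps (xa t) (xs t))).

Definition dist2 (a s a' s' : R) : R := sqrt ((a - a') ^ 2 + (s - s') ^ 2).

Definition exp_stable (ga gs lam sig q : R) (beta : R -> R) (eps Ta Ts : R) : Prop :=
  exists d C mu, 0 < d /\ 0 < C /\ 0 < mu /\
    forall (T : R) (xa xs : R -> R), 0 < T ->
      is_solution ga gs lam sig q beta eps T xa xs ->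
      dist2 (xa 0) (xs 0) Ta Ts < d ->
      forall t, 0 <= t < T ->
        dist2 (xa t) (xs t) Ta Ts <= C * exp (- mu * t) * dist2 (xa 0) (xs 0) Ta Ts.

Definition analytic_at (f : R -> R) (x : R) : Prop :=
  exists (a : nat -> R) (r : R), 0 < r /\
    forall y, Rabs (y - x) < r -> is_pseries a (y - x) (f y).

(* In a warm or cold regime the coalbedo is locally constant, so equilibria are
   the nonnegative zeros of two quartic polynomials in [(Ta, Ts)].  Every such zero
   has [0 < Ta < Ts <= 2^(1/4) Ta]; on this region the Jacobian determinant is
   positive, and comparing two zeros through the sum and the difference of the
   equations shows that there is at most one.

   Near an equilibrium, the deviation for the parameter [e + h] is a fixed point
   of [(x, y) |-> - J^-1 Q(h, x, y)], [Q] the quadratic remainder.  Solving it in formal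
   power series in [h] coefficient by coefficient, and bounding the weighted norms
   [sum |u_n| r^n], which the map keeps small when [r] is small, yields convergent
   series: the branch is analytic, and its first coefficients [- J^-1 dF/de] are
   positive (for [Ta] only when [e > 1]).  Exponential stability comes from the
   Lyapunov function [j21/gs x^2 + j12/ga y^2], whose derivative is at most
   [- c (x^2 + y^2)] near the equilibrium. *)

From Stdlib Require Import Reals Lra Lia Psatz ClassicalEpsilon.
From Coquelicot Require Import Coquelicot.
Open Scope R_scope.

Lemma PS_plus_R (u v : nat -> R) n : PS_plus u v n = u n + v n.
Proof. reflexivity. Qed.

Lemma PS_scal_R (c : R) (u : nat -> R) n : PS_scal c u n = c * u n.
Proof. reflexivity. Qed.

Lemma PS_incr_1_R (u : nat -> R) n :
  PS_incr_1 u n = match n with O => 0 | S m => u m end.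
Proof. now destruct n. Qed.

Definition PS_const (c : R) (n : nat) : R := match n with O => c | S _ => 0 end.

Definition PS_nonconst (u : nat -> R) (n : nat) : R := match n with O => 0 | S _ => u n end.

(* Dropping the constant terms makes the product of order at least 2 whatever
   [u 0] and [v 0] are, so that [agree_mult0] needs no side condition. *)
Definition PS_mult0 (u v : nat -> R) : nat -> R := PS_mult (PS_nonconst u) (PS_nonconst v).

Lemma PS_mult0_0 u v : PS_mult0 u v 0%nat = 0.
Proof. unfold PS_mult0, PS_mult; simpl; ring. Qed.

Lemma PS_mult0_1 u v : PS_mult0 u v 1%nat = 0.
Proof. unfold PS_mult0, PS_mult; simpl; ring. Qed.

Definition wnorm (r : R) (N : nat) (u : nat -> R) : R :=
  sum_f_R0 (fun n => Rabs (u n) * r ^ n) N.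

Definition agree (n : nat) (u v : nat -> R) : Prop := forall k, (k < n)%nat -> u k = v k.

Lemma wnorm_agree r N u v : agree (S N) u v -> wnorm r N u = wnorm r N v.
Proof. intros H; apply sum_eq; intros i Hi; rewrite H by lia; reflexivity. Qed.

Lemma wnorm_scal r N c u : wnorm r N (PS_scal c u) = Rabs c * wnorm r N u.
Proof.
  unfold wnorm; rewrite scal_sum; apply sum_eq; intros i _.
  rewrite PS_scal_R, Rabs_mult; ring.
Qed.

Lemma wnorm_const r N c : wnorm r N (PS_const c) = Rabs c.
Proof.
  induction N as [|N IH]; unfold wnorm in *; simpl; [ring|].
  rewrite IH, Rabs_R0; ring.
Qed.

Section WeightedNorm.

Variable r : R.
Hypothesis r_ge0 : 0 <= r.

Lemma wnorm_term_ge0 (u : nat -> R) n : 0 <= Rabs (u n) * r ^ n.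
Proof. apply Rmult_le_pos; [apply Rabs_pos | apply pow_le; exact r_ge0]. Qed.

Lemma wnorm_ge0 N u : 0 <= wnorm r N u.
Proof. apply cond_pos_sum; intros; apply wnorm_term_ge0. Qed.

Lemma wnorm_le_S N u : wnorm r N u <= wnorm r (S N) u.
Proof. unfold wnorm; rewrite tech5; generalize (wnorm_term_ge0 u (S N)); lra. Qed.

Lemma wnorm_plus N u v : wnorm r N (PS_plus u v) <= wnorm r N u + wnorm r N v.
Proof.
  unfold wnorm; rewrite <- sum_plus; apply sum_Rle; intros n _.
  rewrite PS_plus_R, <- Rmult_plus_distr_r.
  apply Rmult_le_compat_r; [apply pow_le; lra | apply Rabs_triang].
Qed.

Lemma wnorm_nonconst N u : wnorm r N (PS_nonconst u) <= wnorm r N u.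
Proof.
  apply sum_Rle; intros [|n] _; simpl; [|lra].
  rewrite Rabs_R0, Rmult_0_l; apply wnorm_term_ge0.
Qed.

Lemma wnorm_incr_1 N u : wnorm r N (PS_incr_1 u) <= r * wnorm r N u.
Proof.
  assert (Hshift : forall M, wnorm r (S M) (PS_incr_1 u) = r * wnorm r M u).
  { induction M as [|M IH]; unfold wnorm in *.
    - simpl. change (Rabs zero) with (Rabs 0). rewrite Rabs_R0; ring.
    - rewrite tech5, IH, tech5. simpl; ring. }
  destruct N as [|N].
  - unfold wnorm; simpl. change (Rabs zero) with (Rabs 0). rewrite Rabs_R0, Rmult_0_l.
    apply Rmult_le_pos; [lra | apply wnorm_term_ge0].
  - rewrite Hshift. apply Rmult_le_compat_l; [lra | apply wnorm_le_S].
Qed.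

Lemma cauchy_product_le (A B : nat -> R) N :
  (forall n, 0 <= A n) -> (forall n, 0 <= B n) ->
  sum_f_R0 (fun k => sum_f_R0 (fun p => A p * B (k - p)%nat) k) N <=
  sum_f_R0 A N * sum_f_R0 B N.
Proof.
  intros HA HB. destruct N as [|N]; [simpl; lra|].
  rewrite cauchy_finite by lia.
  match goal with |- ?x <= ?x + ?y => enough (0 <= y) by lra end.
  apply cond_pos_sum; intros; apply cond_pos_sum; intros; apply Rmult_le_pos; auto.
Qed.

Lemma wnorm_mult N u v : wnorm r N (PS_mult u v) <= wnorm r N u * wnorm r N v.
Proof.
  eapply Rle_trans.
  2: apply (cauchy_product_le (fun k => Rabs (u k) * r ^ k) (fun k => Rabs (v k) * r ^ k));
     intros; apply wnorm_term_ge0.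
  apply sum_Rle; intros n _; unfold PS_mult.
  eapply Rle_trans; [apply Rmult_le_compat_r; [apply pow_le; lra | apply Rsum_abs]|].
  rewrite Rmult_comm, scal_sum. apply sum_Rle; intros k Hk.
  replace (r ^ n) with (r ^ k * r ^ (n - k)) by (rewrite <- pow_add; f_equal; lia).
  rewrite Rabs_mult; lra.
Qed.

Lemma wnorm_mult0 N u v : wnorm r N (PS_mult0 u v) <= wnorm r N u * wnorm r N v.
Proof.
  eapply Rle_trans; [apply wnorm_mult|].
  apply Rmult_le_compat; try apply wnorm_ge0; apply wnorm_nonconst.
Qed.

End WeightedNorm.

Lemma agree_refl n u : agree n u u.
Proof. now intros k _. Qed.

Lemma agree_le m n u v : (m <= n)%nat -> agree n u v -> agree m u v.
Proof. intros Hmn H k Hk; apply H; lia. Qed.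

Lemma agree_trans n u v w : agree n u v -> agree n v w -> agree n u w.
Proof. intros H1 H2 k Hk; rewrite H1, H2 by exact Hk; reflexivity. Qed.

Lemma agree_plus n u v u' v' :
  agree n u u' -> agree n v v' -> agree n (PS_plus u v) (PS_plus u' v').
Proof. intros H1 H2 k Hk; rewrite !PS_plus_R, H1, H2 by exact Hk; reflexivity. Qed.

Lemma agree_scal n c u u' : agree n u u' -> agree n (PS_scal c u) (PS_scal c u').
Proof. intros H k Hk; rewrite !PS_scal_R, H by exact Hk; reflexivity. Qed.

Lemma agree_incr_1 n u u' : agree n u u' -> agree (S n) (PS_incr_1 u) (PS_incr_1 u').
Proof. intros H [|k] Hk; rewrite !PS_incr_1_R; [reflexivity | apply H; lia]. Qed.

Lemma agree_mult0 n u v u' v' :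
  agree n u u' -> agree n v v' -> agree (S n) (PS_mult0 u v) (PS_mult0 u' v').
Proof.
  intros H1 H2 k Hk. unfold PS_mult0, PS_mult. apply sum_eq; intros [|j] Hj; simpl; [ring|].
  destruct (k - S j)%nat as [|m] eqn:E; simpl; [ring|].
  rewrite H1, H2 by lia; reflexivity.
Qed.

Definition wbounded (r : R) (u : nat -> R) : Prop := exists B, forall N, wnorm r N u <= B.

Section Bounded.

Variable r : R.
Hypothesis r_gt0 : 0 < r.

Lemma wbounded_nonconst u : wbounded r u -> wbounded r (PS_nonconst u).
Proof.
  intros [B H]; exists B; intros N.
  eapply Rle_trans; [apply wnorm_nonconst; lra | apply H].
Qed.

Lemma wbounded_mult0 u v : wbounded r u -> wbounded r v -> wbounded r (PS_mult0 u v).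
Proof.
  intros [B1 H1] [B2 H2]; exists (B1 * B2); intros N.
  eapply Rle_trans; [apply wnorm_mult0; lra|].
  apply Rmult_le_compat; try apply wnorm_ge0; auto; lra.
Qed.

Lemma CV_radius_ge_wbounded u : wbounded r u -> Rbar_le r (CV_radius u).
Proof.
  intros [B H]. apply (proj1 (CV_radius_bounded u)). exists B; intros n.
  eapply Rle_trans; [|apply (H n)].
  rewrite Rabs_mult, (Rabs_pos_eq (r ^ n)) by (apply pow_le; lra).
  destruct n as [|n]; unfold wnorm; [simpl; lra|].
  rewrite tech5. generalize (wnorm_ge0 r (Rlt_le _ _ r_gt0) n u); unfold wnorm; lra.
Qed.

Lemma CV_radius_gt_wbounded u x : wbounded r u -> Rabs x < r -> Rbar_lt (Rabs x) (CV_radius u).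
Proof.
  intros Hu Hx. generalize (CV_radius_ge_wbounded u Hu).
  destruct (CV_radius u); simpl; auto; lra.
Qed.

End Bounded.

Lemma is_pseries_abs_le (u : nat -> R) (x l r B : R) :
  is_pseries u x l -> Rabs x <= r -> (forall N, wnorm r N u <= B) -> Rabs l <= B.
Proof.
  intros Hl Hx HB.
  assert (L : is_lim_seq (fun N => Rabs (sum_n (fun k => scal (pow_n x k) (u k)) N)) (Rabs l))
    by exact (is_lim_seq_abs _ l Hl).
  refine (is_lim_seq_le _ (fun _ => B) (Rabs l) B _ L (is_lim_seq_const B)); intros N.
  rewrite sum_n_Reals. eapply Rle_trans; [apply Rsum_abs|]. eapply Rle_trans; [|apply (HB N)].
  apply sum_Rle; intros n _. change (scal (pow_n x n) (u n)) with (pow_n x n * u n).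
  rewrite pow_n_pow, Rabs_mult, <- RPow_abs, Rmult_comm.
  apply Rmult_le_compat_l; [apply Rabs_pos|]. apply pow_incr; split; [apply Rabs_pos | exact Hx].
Qed.

Lemma is_pseries_const (c x : R) : is_pseries (PS_const c) x c.
Proof.
  eapply filterlim_ext; [|apply filterlim_const]. intros n; symmetry.
  induction n as [|n IH].
  - rewrite sum_O; apply scal_one.
  - rewrite sum_Sn, IH. change (c + pow_n x (S n) * 0 = c). ring.
Qed.

Lemma is_pseries_nonconst (u : nat -> R) (x l : R) :
  is_pseries u x l -> is_pseries (PS_nonconst u) x (l - u 0%nat).
Proof.
  intros H. apply (is_pseries_ext (PS_plus u (PS_const (- u 0%nat)))).
  - intros [|n]; rewrite PS_plus_R; simpl; ring.
  - exact (is_pseries_plus _ _ x l _ H (is_pseries_const _ x)).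
Qed.

Lemma is_pseries_mult0 r u v x a b :
  0 < r -> wbounded r u -> wbounded r v -> Rabs x < r ->
  is_pseries u x a -> is_pseries v x b ->
  is_pseries (PS_mult0 u v) x ((a - u 0%nat) * (b - v 0%nat)).
Proof.
  intros Hr Hu Hv Hx Ha Hb. apply is_pseries_mult; try apply is_pseries_nonconst; auto;
  apply (CV_radius_gt_wbounded r); auto; apply wbounded_nonconst; auto.
Qed.

Definition ps_map : Type := (nat -> R) -> (nat -> R) -> nat -> R.

Definition ps_causal (F : ps_map) : Prop := forall n a s a' s',
  agree n a a' -> agree n s s' -> agree n (F a s) (F a' s').

Definition ps_raising (F : ps_map) : Prop := forall n a s a' s',
  agree n a a' -> agree n s s' -> agree (S n) (F a s) (F a' s').

Section FormalFixedPoint.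

Variables Phi_a Phi_s : ps_map.
Hypotheses (Phi_a_raising : ps_raising Phi_a) (Phi_s_raising : ps_raising Phi_s).

Fixpoint Phi_iter (m : nat) : (nat -> R) * (nat -> R) :=
  match m with
  | O => (fun _ => 0, fun _ => 0)
  | S m => let p := Phi_iter m in (Phi_a (fst p) (snd p), Phi_s (fst p) (snd p))
  end.

Lemma Phi_iter_agree m m' : (m <= m')%nat ->
  agree m (fst (Phi_iter m)) (fst (Phi_iter m')) /\
  agree m (snd (Phi_iter m)) (snd (Phi_iter m')).
Proof.
  assert (Hstep : forall k, agree k (fst (Phi_iter k)) (fst (Phi_iter (S k))) /\
                            agree k (snd (Phi_iter k)) (snd (Phi_iter (S k)))).
  { induction k as [|k [IHa IHs]]; [split; intros j Hj; lia|].
    split; [apply Phi_a_raising | apply Phi_s_raising]; assumption. }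
  induction 1 as [|m' Hle [IHa IHs]]; [split; apply agree_refl|].
  destruct (Hstep m') as [Ha Hs].
  split; (eapply agree_trans; [eassumption | eapply agree_le; eassumption]).
Qed.

(* The [n]-th coefficient is frozen from the [n+1]-st iterate on. *)
Definition fix_a (n : nat) : R := fst (Phi_iter (S n)) n.
Definition fix_s (n : nat) : R := snd (Phi_iter (S n)) n.

Lemma fix_agree N :
  agree (S N) fix_a (fst (Phi_iter (S N))) /\ agree (S N) fix_s (snd (Phi_iter (S N))).
Proof.
  split; intros k Hk; unfold fix_a, fix_s;
  apply (Phi_iter_agree (S k) (S N)); lia.
Qed.

Lemma fix_eq n : Phi_a fix_a fix_s n = fix_a n /\ Phi_s fix_a fix_s n = fix_s n.
Proof.
  destruct (fix_agree n) as [Ha Hs].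
  assert (Ea := Phi_a_raising _ _ _ _ _ Ha Hs). assert (Es := Phi_s_raising _ _ _ _ _ Ha Hs).
  destruct (Phi_iter_agree (S n) (S (S n))) as [Fa' Fs']; [lia|].
  rewrite Ea, Es by lia. split.
  - symmetry; apply Fa'; lia.
  - symmetry; apply Fs'; lia.
Qed.

Variables r d : R.
Hypothesis d_ge0 : 0 <= d.
Hypothesis Phi_ball : forall N a s, wnorm r N a <= d -> wnorm r N s <= d ->
  wnorm r N (Phi_a a s) <= d /\ wnorm r N (Phi_s a s) <= d.

Lemma wnorm_fix N : wnorm r N fix_a <= d /\ wnorm r N fix_s <= d.
Proof.
  assert (Hiter : forall m, wnorm r N (fst (Phi_iter m)) <= d /\ wnorm r N (snd (Phi_iter m)) <= d).
  { induction m as [|m [IHa IHs]].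
    - assert (Z : wnorm r N (fun _ => 0) = 0).
      { unfold wnorm. rewrite (sum_eq _ (fun _ => 0)), sum_cte by (intros; rewrite Rabs_R0; ring).
        ring. }
      simpl; rewrite Z; lra.
    - exact (Phi_ball N _ _ IHa IHs). }
  destruct (fix_agree N) as [Ha Hs].
  rewrite (wnorm_agree r N _ _ Ha), (wnorm_agree r N _ _ Hs). apply Hiter.
Qed.

End FormalFixedPoint.

(* The estimates below hold on the ball [wnorm r N a, wnorm r N s <= t <= 1]
   uniformly in [r], [N] and [t]; a [ps_small] map sends that ball into itself
   once [t] and [r / t] are small. *)
Definition ps_bounded (F : ps_map) : Prop := exists B, 0 <= B /\
  forall r N t a s, 0 <= r -> 0 <= t <= 1 -> wnorm r N a <= t -> wnorm r N s <= t ->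
  wnorm r N (F a s) <= B.

Definition ps_nonexpansive (F : ps_map) : Prop :=
  forall r N t a s, 0 <= r -> 0 <= t <= 1 -> wnorm r N a <= t -> wnorm r N s <= t ->
  wnorm r N (F a s) <= t.

Definition ps_small (F : ps_map) : Prop := exists K, 0 <= K /\
  forall r N t a s, 0 <= r -> 0 <= t <= 1 -> wnorm r N a <= t -> wnorm r N s <= t ->
  wnorm r N (F a s) <= K * (t ^ 2 + r).

Lemma ps_causal_fst : ps_causal (fun a _ => a).
Proof. intros n a s a' s' Ha _; exact Ha. Qed.

Lemma ps_causal_snd : ps_causal (fun _ s => s).
Proof. intros n a s a' s' _ Hs; exact Hs. Qed.

Lemma ps_causal_const c : ps_causal (fun _ _ => PS_const c).
Proof. intros n a s a' s' _ _; apply agree_refl. Qed.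

Lemma ps_causal_plus F G : ps_causal F -> ps_causal G ->
  ps_causal (fun a s => PS_plus (F a s) (G a s)).
Proof. intros HF HG n a s a' s' Ha Hs; apply agree_plus; auto. Qed.

Lemma ps_causal_scal c F : ps_causal F -> ps_causal (fun a s => PS_scal c (F a s)).
Proof. intros HF n a s a' s' Ha Hs; apply agree_scal; auto. Qed.

Lemma ps_causal_raising F : ps_raising F -> ps_causal F.
Proof. intros HF n a s a' s' Ha Hs; eapply agree_le; [|apply HF; eassumption]; lia. Qed.

Lemma ps_raising_plus F G : ps_raising F -> ps_raising G ->
  ps_raising (fun a s => PS_plus (F a s) (G a s)).
Proof. intros HF HG n a s a' s' Ha Hs; apply agree_plus; auto. Qed.

Lemma ps_raising_scal c F : ps_raising F -> ps_raising (fun a s => PS_scal c (F a s)).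
Proof. intros HF n a s a' s' Ha Hs; apply agree_scal; auto. Qed.

Lemma ps_raising_incr_1 F : ps_causal F -> ps_raising (fun a s => PS_incr_1 (F a s)).
Proof. intros HF n a s a' s' Ha Hs; apply agree_incr_1; auto. Qed.

Lemma ps_nonexpansive_fst : ps_nonexpansive (fun a _ => a).
Proof. intros r N t a s _ _ Ha _; exact Ha. Qed.

Lemma ps_nonexpansive_snd : ps_nonexpansive (fun _ s => s).
Proof. intros r N t a s _ _ _ Hs; exact Hs. Qed.

Lemma ps_bounded_nonexpansive F : ps_nonexpansive F -> ps_bounded F.
Proof.
  intros HF; exists 1; split; [lra|].
  intros r N t a s Hr Ht Ha Hs; generalize (HF r N t a s Hr Ht Ha Hs); lra.
Qed.

Lemma ps_bounded_const c : ps_bounded (fun _ _ => PS_const c).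
Proof. exists (Rabs c); split; [apply Rabs_pos|]. intros; rewrite wnorm_const; lra. Qed.

Lemma ps_bounded_plus F G : ps_bounded F -> ps_bounded G ->
  ps_bounded (fun a s => PS_plus (F a s) (G a s)).
Proof.
  intros [B1 [HB1 H1]] [B2 [HB2 H2]]; exists (B1 + B2); split; [lra|].
  intros r N t a s Hr Ht Ha Hs. eapply Rle_trans; [apply wnorm_plus; exact Hr|].
  generalize (H1 r N t a s Hr Ht Ha Hs) (H2 r N t a s Hr Ht Ha Hs); lra.
Qed.

Lemma ps_bounded_scal c F : ps_bounded F -> ps_bounded (fun a s => PS_scal c (F a s)).
Proof.
  intros [B [HB H]]; exists (Rabs c * B); split; [apply Rmult_le_pos; [apply Rabs_pos | exact HB]|].
  intros r N t a s Hr Ht Ha Hs. rewrite wnorm_scal.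
  apply Rmult_le_compat_l; [apply Rabs_pos | exact (H r N t a s Hr Ht Ha Hs)].
Qed.

Lemma ps_small_plus F G : ps_small F -> ps_small G ->
  ps_small (fun a s => PS_plus (F a s) (G a s)).
Proof.
  intros [K1 [HK1 H1]] [K2 [HK2 H2]]; exists (K1 + K2); split; [lra|].
  intros r N t a s Hr Ht Ha Hs. eapply Rle_trans; [apply wnorm_plus; exact Hr|].
  generalize (H1 r N t a s Hr Ht Ha Hs) (H2 r N t a s Hr Ht Ha Hs); lra.
Qed.

Lemma ps_small_scal c F : ps_small F -> ps_small (fun a s => PS_scal c (F a s)).
Proof.
  intros [K [HK H]]; exists (Rabs c * K); split; [apply Rmult_le_pos; [apply Rabs_pos | exact HK]|].
  intros r N t a s Hr Ht Ha Hs. rewrite wnorm_scal, Rmult_assoc.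
  apply Rmult_le_compat_l; [apply Rabs_pos | exact (H r N t a s Hr Ht Ha Hs)].
Qed.

Lemma ps_small_incr_1 F : ps_bounded F -> ps_small (fun a s => PS_incr_1 (F a s)).
Proof.
  intros [B [HB H]]; exists B; split; [exact HB|].
  intros r N t a s Hr Ht Ha Hs. eapply Rle_trans; [apply wnorm_incr_1; exact Hr|].
  generalize (H r N t a s Hr Ht Ha Hs) (pow2_ge_0 t); nra.
Qed.

Definition quart_rem (A x : R) : R := 6 * A ^ 2 * x ^ 2 + 4 * A * x ^ 3 + x ^ 4.

Lemma pow4_expand A x : (A + x) ^ 4 = A ^ 4 + 4 * A ^ 3 * x + quart_rem A x.
Proof. unfold quart_rem; ring. Qed.

Definition PS_quart_rem (A : R) (u : nat -> R) : nat -> R :=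
  let u2 := PS_mult0 u u in let u3 := PS_mult0 u u2 in
  PS_plus (PS_scal (6 * A ^ 2) u2) (PS_plus (PS_scal (4 * A) u3) (PS_mult0 u u3)).

Lemma PS_quart_rem_0 A u : PS_quart_rem A u 0%nat = 0.
Proof. unfold PS_quart_rem; rewrite !PS_plus_R, !PS_scal_R, !PS_mult0_0; ring. Qed.

Lemma PS_quart_rem_1 A u : PS_quart_rem A u 1%nat = 0.
Proof. unfold PS_quart_rem; rewrite !PS_plus_R, !PS_scal_R, !PS_mult0_1; ring. Qed.

Lemma agree_quart_rem n A u u' :
  agree n u u' -> agree (S n) (PS_quart_rem A u) (PS_quart_rem A u').
Proof.
  intros H. assert (H2 := agree_mult0 _ _ _ _ _ H H).
  assert (H3 := agree_mult0 _ _ _ _ _ H (agree_le n _ _ _ (le_S _ _ (le_n _)) H2)).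
  assert (H4 := agree_mult0 _ _ _ _ _ H (agree_le n _ _ _ (le_S _ _ (le_n _)) H3)).
  repeat apply agree_plus; try apply agree_scal; assumption.
Qed.

Lemma wnorm_quart_rem r N A u t : 0 <= r -> 0 <= t <= 1 -> wnorm r N u <= t ->
  wnorm r N (PS_quart_rem A u) <= (6 * A ^ 2 + 4 * Rabs A + 1) * t ^ 2.
Proof.
  intros Hr Ht Hu. unfold PS_quart_rem.
  assert (H0 := wnorm_ge0 r Hr N u).
  assert (H2 : wnorm r N (PS_mult0 u u) <= t ^ 2).
  { eapply Rle_trans; [apply wnorm_mult0; exact Hr|]. simpl; nra. }
  assert (H2' := wnorm_ge0 r Hr N (PS_mult0 u u)).
  assert (H3 : wnorm r N (PS_mult0 u (PS_mult0 u u)) <= t ^ 2).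
  { eapply Rle_trans; [apply wnorm_mult0; exact Hr|]. simpl in *; nra. }
  assert (H3' := wnorm_ge0 r Hr N (PS_mult0 u (PS_mult0 u u))).
  assert (H4 : wnorm r N (PS_mult0 u (PS_mult0 u (PS_mult0 u u))) <= t ^ 2).
  { eapply Rle_trans; [apply wnorm_mult0; exact Hr|]. simpl in *; nra. }
  eapply Rle_trans; [apply wnorm_plus; exact Hr|]. rewrite wnorm_scal.
  eapply Rle_trans; [apply Rplus_le_compat_l, wnorm_plus; exact Hr|]. rewrite wnorm_scal.
  rewrite !Rabs_mult, (Rabs_pos_eq 6), (Rabs_pos_eq 4), (Rabs_pos_eq (A ^ 2)) by
    (lra || apply pow2_ge_0).
  generalize (Rabs_pos A) (pow2_ge_0 A); nra.
Qed.

Lemma ps_raising_quart_rem A F : ps_causal F -> ps_raising (fun a s => PS_quart_rem A (F a s)).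
Proof. intros HF n a s a' s' Ha Hs; apply agree_quart_rem, HF; assumption. Qed.

Lemma ps_small_quart_rem A F :
  ps_nonexpansive F -> ps_small (fun a s => PS_quart_rem A (F a s)).
Proof.
  intros HF. exists (6 * A ^ 2 + 4 * Rabs A + 1).
  split; [generalize (Rabs_pos A) (pow2_ge_0 A); lra|].
  intros r N t a s Hr Ht Ha Hs. eapply Rle_trans; [apply wnorm_quart_rem; eauto|].
  generalize (Rabs_pos A) (pow2_ge_0 A) (pow2_ge_0 t); nra.
Qed.

Lemma ps_bounded_quart_rem A F :
  ps_nonexpansive F -> ps_bounded (fun a s => PS_quart_rem A (F a s)).
Proof.
  intros HF. exists (6 * A ^ 2 + 4 * Rabs A + 1).
  split; [generalize (Rabs_pos A) (pow2_ge_0 A); lra|].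
  intros r N t a s Hr Ht Ha Hs. eapply Rle_trans; [apply wnorm_quart_rem; eauto|].
  assert (t ^ 2 <= 1) by (simpl; nra). generalize (Rabs_pos A) (pow2_ge_0 A); nra.
Qed.

Ltac ps_closure :=
  repeat lazymatch goal with
  | |- _ (fun a s => PS_quart_rem _ (@?F a s)) =>
      first [ apply ps_raising_quart_rem | apply ps_causal_raising, ps_raising_quart_rem
            | apply ps_small_quart_rem | apply ps_bounded_quart_rem ]
  | |- _ (fun a s => PS_plus (@?F a s) (@?G a s)) =>
      first [ apply ps_causal_plus | apply ps_raising_plus
            | apply ps_bounded_plus | apply ps_small_plus ]
  | |- _ (fun a s => PS_scal _ (@?F a s)) =>
      first [ apply ps_causal_scal | apply ps_raising_scal
            | apply ps_bounded_scal | apply ps_small_scal ]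
  | |- _ (fun a s => PS_incr_1 (@?F a s)) =>
      first [ apply ps_raising_incr_1 | apply ps_small_incr_1 ]
  | |- _ (fun _ _ => PS_const _) => first [ apply ps_causal_const | apply ps_bounded_const ]
  | |- _ (fun a _ => a) =>
      first [ apply ps_causal_fst | apply ps_nonexpansive_fst
            | apply ps_bounded_nonexpansive, ps_nonexpansive_fst ]
  | |- _ (fun _ s => s) =>
      first [ apply ps_causal_snd | apply ps_nonexpansive_snd
            | apply ps_bounded_nonexpansive, ps_nonexpansive_snd ]
  end.

Lemma analytic_at_of_pseries (u : nat -> R) f c r : 0 < r ->
  (forall z, Rabs (z - c) < r -> is_pseries u (z - c) (f z - f c)) -> analytic_at f c.
Proof.
  intros Hr Hu. exists (PS_plus (PS_const (f c)) u), r; split; [exact Hr|].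
  intros z Hz. replace (f z) with (f c + (f z - f c)) by ring.
  exact (is_pseries_plus _ _ _ _ _ (is_pseries_const _ _) (Hu z Hz)).
Qed.

Lemma is_derive_of_pseries (u : nat -> R) f c r : 0 < r -> Rbar_le r (CV_radius u) ->
  (forall z, Rabs (z - c) < r -> is_pseries u (z - c) (f z - f c)) ->
  is_derive f c (u 1%nat).
Proof.
  intros Hr Hcv Hu.
  assert (Hcv0 : Rbar_lt (Rabs 0) (CV_radius u)).
  { rewrite Rabs_R0. destruct (CV_radius u); simpl in *; auto; lra. }
  assert (D1 : is_derive (fun z => PSeries u (z - c)) c (u 1%nat)).
  { replace (u 1%nat) with (scal 1 (PSeries (PS_derive u) (c - c)))
      by (rewrite Rminus_eq_0, PSeries_0; unfold PS_derive; simpl;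
          change (1 * (1 * u 1%nat) = u 1%nat); ring).
    apply (is_derive_comp (PSeries u) (fun z => z - c)).
    - rewrite Rminus_eq_0. exact (is_derive_PSeries u 0 Hcv0).
    - auto_derive; [exact I | ring]. }
  assert (D := is_derive_plus (fun _ => f c) _ c _ _
                 (is_derive_const (K := R_AbsRing) (V := R_NormedModule) (f c) c) D1).
  change (plus 0 (u 1%nat)) with (0 + u 1%nat) in D. rewrite Rplus_0_l in D.
  refine (is_derive_ext_loc _ _ _ _ _ D). exists (mkposreal r Hr); intros z Hz.
  change (f c + PSeries u (z - c) = f z). rewrite (is_pseries_unique _ _ _ (Hu z Hz)). ring.
Qed.

Lemma nonincreasing_of_is_derive (f df : R -> R) a b : a <= b ->
  (forall x, a <= x <= b -> continuous f x) ->
  (forall x, a < x < b -> is_derive f x (df x) /\ df x <= 0) -> f b <= f a.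
Proof.
  intros Hab Hc Hd.
  destruct (MVT_gen f a b (fun x => Rmin (df x) 0)) as [c [_ E]];
    rewrite ?Rmin_left, ?Rmax_right in * by lra.
  - intros x Hx. destruct (Hd x Hx) as [D Hneg]. rewrite Rmin_left by exact Hneg. exact D.
  - intros x Hx. apply continuity_pt_filterlim, Hc, Hx.
  - assert (Rmin (df c) 0 * (b - a) <= 0)
      by (apply Rmult_le_0_r; [apply Rmin_r | lra]).
    lra.
Qed.

Lemma increasing_of_is_derive_pos (f : R -> R) c d :
  (forall x, Rabs (x - c) < d -> exists l, is_derive f x l /\ 0 < l) ->
  forall x y, Rabs (x - c) < d -> Rabs (y - c) < d -> x < y -> f x < f y.
Proof.
  intros Hd x y Hx Hy Hxy.
  assert (Hin : forall z, x <= z <= y -> Rabs (z - c) < d).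
  { intros z Hz. apply Rabs_lt_between in Hx, Hy. apply Rabs_lt_between; lra. }
  destruct (MVT_gen f x y (Derive f)) as [z [Hz E]];
    rewrite ?Rmin_left, ?Rmax_right in * by lra.
  - intros z Hz. destruct (Hd z (Hin z (conj (Rlt_le _ _ (proj1 Hz)) (Rlt_le _ _ (proj2 Hz)))))
      as [l [D _]].
    rewrite (is_derive_unique _ _ _ D). exact D.
  - intros z Hz. destruct (Hd z (Hin z Hz)) as [l [D _]].
    apply continuity_pt_filterlim, (ex_derive_continuous (K := R_AbsRing) (V := R_NormedModule)).
    exists l; exact D.
  - destruct (Hd z (Hin z Hz)) as [l [D Hl]]. rewrite (is_derive_unique _ _ _ D) in E.
    assert (0 < l * (y - x)) by (apply Rmult_lt_0_compat; lra). lra.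
Qed.

Lemma continuous_lt_locally (V : R -> R) m L :
  continuous V m -> V m < L -> exists del : posreal, forall u, Rabs (u - m) < del -> V u < L.
Proof.
  intros HC HL.
  assert (Hn : locally (V m) (fun y => y < L)).
  { exists (mkposreal (L - V m) ltac:(lra)); intros y Hy.
    change (Rabs (y - V m) < L - V m) in Hy. apply Rabs_lt_between in Hy; lra. }
  destruct (HC _ Hn) as [del Hdel]. exists del; intros u Hu; exact (Hdel u Hu).
Qed.

Lemma lyapunov_decay (V dV : R -> R) T L mu :
  0 <= mu -> (forall u, 0 <= V u) -> V 0 < L ->
  (forall u, 0 <= u < T -> continuous V u) ->
  (forall u, 0 < u < T -> is_derive V u (dV u)) ->
  (forall u, 0 < u < T -> V u < L -> dV u + 2 * mu * V u <= 0) ->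
  forall t, 0 <= t < T -> V t * exp (2 * mu * t) <= V 0.
Proof.
  intros Hmu Hpos HV0 HC HD Hneg.
  assert (Hdecay : forall s, 0 <= s < T -> (forall u, 0 <= u < s -> V u < L) ->
                     V s * exp (2 * mu * s) <= V 0).
  { intros s Hs HL.
    replace (V 0) with (V 0 * exp (2 * mu * 0)) by (rewrite Rmult_0_r, exp_0; ring).
    apply (nonincreasing_of_is_derive (fun u => V u * exp (2 * mu * u))
             (fun u => (dV u + 2 * mu * V u) * exp (2 * mu * u))); [lra | |].
    - intros u Hu. apply (continuous_mult V (fun u => exp (2 * mu * u))); [apply HC; lra|].
      apply (ex_derive_continuous (K := R_AbsRing) (V := R_NormedModule)). auto_derive; exact I.
    - intros u Hu. split.
      + replace ((dV u + 2 * mu * V u) * exp (2 * mu * u))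
          with (dV u * exp (2 * mu * u) + V u * (2 * mu * exp (2 * mu * u))) by ring.
        apply (is_derive_mult V (fun u => exp (2 * mu * u))); [apply HD; lra | | apply Rmult_comm].
        auto_derive; [exact I | ring].
      + apply Rmult_le_0_r; [apply Hneg; [lra | apply HL; lra] | apply Rlt_le, exp_pos]. }
  assert (Hbelow : forall s, 0 <= s < T -> (forall u, 0 <= u < s -> V u < L) -> V s < L).
  { intros s Hs HL. generalize (Hdecay s Hs HL) (Hpos s) (exp_ineq1_le (2 * mu * s)).
    assert (0 <= 2 * mu * s) by nra. nra. }
  intros t Ht. apply Hdecay; [exact Ht|].
  (* continuity induction: the supremum [m] of the good times is [t] *)
  set (E := fun s => 0 <= s <= t /\ forall u, 0 <= u < s -> V u < L).
  destruct (completeness E) as [m [Hub Hlub]].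
  { exists t; intros s [Hs _]; lra. }
  { exists 0; split; [lra | intros u Hu; lra]. }
  assert (Hm0 : 0 <= m) by (apply Hub; split; [lra | intros u Hu; lra]).
  assert (Hmt : m <= t) by (apply Hlub; intros s [Hs _]; lra).
  assert (Hlt : forall u, 0 <= u < m -> V u < L).
  { intros u Hu. apply Classical_Prop.NNPP; intros Hnot.
    assert (m <= u); [|lra].
    apply Hlub; intros s [Hs HsL]. apply Rnot_lt_le; intros Hus. apply Hnot, HsL; lra. }
  enough (m = t) by (subst m; exact Hlt).
  destruct Hmt as [Hmt|]; [exfalso | assumption].
  destruct (continuous_lt_locally V m L (HC m ltac:(lra)) (Hbelow m ltac:(lra) Hlt))
    as [del Hdel].
  assert (Hs : E (Rmin (m + del / 2) t)).
  { split; [split; [apply Rmin_glb; generalize (cond_pos del); lra | apply Rmin_r]|].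
    intros u Hu. destruct (Rlt_or_le u m) as [Hum|Hum]; [apply Hlt; lra|].
    apply Hdel. assert (u <= m + del / 2) by (generalize (Rmin_l (m + del / 2) t); lra).
    rewrite Rabs_pos_eq by lra. generalize (cond_pos del); lra. }
  generalize (Hub _ Hs). apply Rmin_case; generalize (cond_pos del); lra.
Qed.

Lemma pow_lt_compat x y n : 0 <= x < y -> (0 < n)%nat -> x ^ n < y ^ n.
Proof.
  intros Hxy Hn. induction n as [|[|n] IH]; [lia | simpl; lra|].
  change (x * x ^ S n < y * y ^ S n).
  assert (0 <= x ^ S n) by (apply pow_le; lra).
  specialize (IH ltac:(lia)). nra.
Qed.

Lemma pow_le_reg x y n : 0 <= y -> (0 < n)%nat -> x ^ n <= y ^ n -> x <= y.
Proof.
  intros Hy Hn H. apply Rnot_lt_le; intros Hyx.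
  generalize (pow_lt_compat y x n (conj Hy Hyx) Hn); lra.
Qed.

Definition Fa_poly (lam sig e Ta Ts : R) : R :=
  - lam * (Ta - Ts) + e * sig * Ts ^ 4 - 2 * e * sig * Ta ^ 4.

Definition Fs_poly (lam sig qb e Ta Ts : R) : R :=
  - lam * (Ts - Ta) - sig * Ts ^ 4 + e * sig * Ta ^ 4 + qb.

Lemma p4_nonneg x : 0 <= x -> p4 x = x ^ 4.
Proof. intros Hx; unfold p4; rewrite Rabs_pos_eq by exact Hx; ring. Qed.

Lemma Fa_eq_poly lam sig e a s : 0 <= a -> 0 <= s -> Fa lam sig e a s = Fa_poly lam sig e a s.
Proof. intros Ha Hs; unfold Fa, Fa_poly; rewrite !p4_nonneg by assumption; ring. Qed.

Lemma Fs_eq_poly lam sig q beta e a s : 0 <= a -> 0 <= s ->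
  Fs lam sig q beta e a s = Fs_poly lam sig (q * beta s) e a s.
Proof. intros Ha Hs; unfold Fs, Fs_poly; rewrite !p4_nonneg by assumption; ring. Qed.

Definition equilibrium_region (Ta Ts : R) : Prop := 0 < Ta < Ts /\ Ts ^ 4 <= 2 * Ta ^ 4.

Lemma equilibrium_region_of_eq lam sig qb e Ta Ts :
  0 <= lam -> 0 < sig -> 0 < e -> 0 < qb -> 0 <= Ta -> 0 <= Ts ->
  Fa_poly lam sig e Ta Ts = 0 -> Fs_poly lam sig qb e Ta Ts = 0 -> equilibrium_region Ta Ts.
Proof.
  unfold Fa_poly, Fs_poly, equilibrium_region. intros Hl Hs He Hq HA HS Fa Fs.
  assert (Hes : 0 < e * sig) by nra.
  assert (HA4 : 0 <= Ta ^ 4) by (apply pow_le; lra).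
  assert (HS4 : 0 <= Ts ^ 4) by (apply pow_le; lra).
  assert (HS0 : 0 < Ts).
  { destruct HS as [|<-]; [assumption|]. exfalso.
    assert (0 <= lam * Ta) by nra. simpl in Fs; nra. }
  assert (HAS : Ta < Ts).
  { apply Rnot_le_lt; intros HSA.
    assert (Ts ^ 4 <= Ta ^ 4) by (apply pow_incr; lra).
    assert (0 < Ta ^ 4) by (apply pow_lt; lra). nra. }
  assert (HA0 : 0 < Ta).
  { destruct HA as [|<-]; [assumption|]. exfalso.
    assert (0 < Ts ^ 4) by (apply pow_lt; lra). simpl in Fa; nra. }
  split; [lra|]. nra.
Qed.

Lemma cube_lt_of_region Ta Ts : equilibrium_region Ta Ts -> Ts ^ 3 < 2 * Ta ^ 3.
Proof.
  intros [[HA HAS] H4]. apply Rnot_le_lt; intros H.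
  assert (0 < Ts ^ 3) by (apply pow_lt; lra).
  assert (Ta * Ts ^ 3 < Ts * Ts ^ 3) by (apply Rmult_lt_compat_r; lra).
  assert (Ta * (2 * Ta ^ 3) <= Ta * Ts ^ 3) by (apply Rmult_le_compat_l; lra).
  simpl in *; nra.
Qed.

Lemma cube_sum_le_of_region Ta Ts Ta' Ts' :
  equilibrium_region Ta Ts -> equilibrium_region Ta' Ts' ->
  Ts' ^ 3 + Ts' ^ 2 * Ts + Ts' * Ts ^ 2 + Ts ^ 3 <=
  2 * (Ta' ^ 3 + Ta' ^ 2 * Ta + Ta' * Ta ^ 2 + Ta ^ 3).
Proof.
  intros [[HA HAS] H4] [[HA' HAS'] H4'].
  (* with [c = 2^(1/4)] both [Ts <= c Ta] and [Ts' <= c Ta'], and [c^3 <= 2] *)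
  set (c := sqrt (sqrt 2)).
  assert (Hc4 : c ^ 4 = 2).
  { replace (c ^ 4) with ((c * c) * (c * c)) by ring. unfold c.
    rewrite sqrt_sqrt by (apply sqrt_pos). rewrite sqrt_sqrt; lra. }
  assert (Hc0 : 0 <= c) by apply sqrt_pos.
  assert (Hc1 : 1 <= c) by (apply (pow_le_reg _ _ 4); [lra | lia | rewrite Hc4; simpl; lra]).
  assert (Hc3 : c ^ 3 <= 2) by (rewrite <- Hc4; simpl; nra).
  assert (HcS : Ts <= c * Ta)
    by (apply (pow_le_reg _ _ 4); [nra | lia | rewrite Rpow_mult_distr, Hc4; lra]).
  assert (HcS' : Ts' <= c * Ta')
    by (apply (pow_le_reg _ _ 4); [nra | lia | rewrite Rpow_mult_distr, Hc4; lra]).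
  assert (Hmono : Ts' ^ 3 + Ts' ^ 2 * Ts + Ts' * Ts ^ 2 + Ts ^ 3 <=
                  c ^ 3 * (Ta' ^ 3 + Ta' ^ 2 * Ta + Ta' * Ta ^ 2 + Ta ^ 3)).
  { replace (c ^ 3 * (Ta' ^ 3 + Ta' ^ 2 * Ta + Ta' * Ta ^ 2 + Ta ^ 3)) with
      ((c * Ta') ^ 3 + (c * Ta') ^ 2 * (c * Ta) + (c * Ta') * (c * Ta) ^ 2 + (c * Ta) ^ 3) by ring.
    assert (Ts' ^ 2 <= (c * Ta') ^ 2) by (apply pow_incr; lra).
    assert (Ts ^ 2 <= (c * Ta) ^ 2) by (apply pow_incr; lra).
    assert (Ts' ^ 3 <= (c * Ta') ^ 3) by (apply pow_incr; lra).
    assert (Ts ^ 3 <= (c * Ta) ^ 3) by (apply pow_incr; lra).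
    assert (Ts' ^ 2 * Ts <= (c * Ta') ^ 2 * (c * Ta))
      by (apply Rmult_le_compat; try apply pow_le; lra).
    assert (Ts' * Ts ^ 2 <= (c * Ta') * (c * Ta) ^ 2)
      by (apply Rmult_le_compat; try apply pow_le; lra).
    lra. }
  assert (0 <= Ta' ^ 3 + Ta' ^ 2 * Ta + Ta' * Ta ^ 2 + Ta ^ 3)
    by (generalize (pow2_ge_0 Ta) (pow2_ge_0 Ta'); simpl; nra).
  nra.
Qed.

Lemma no_ordered_equilibria lam sig qb e Ta Ts Ta' Ts' :
  0 <= lam -> 0 < sig -> 0 < e < 2 ->
  equilibrium_region Ta Ts -> equilibrium_region Ta' Ts' ->
  Fa_poly lam sig e Ta Ts = 0 -> Fs_poly lam sig qb e Ta Ts = 0 ->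
  Fa_poly lam sig e Ta' Ts' = 0 -> Fs_poly lam sig qb e Ta' Ts' = 0 -> ~ Ts < Ts'.
Proof.
  intros Hl Hs He HR HR' Fa Fs Fa' Fs' HSS.
  generalize (cube_sum_le_of_region Ta Ts Ta' Ts' HR HR').
  destruct HR as [[HA HAS] _], HR' as [[HA' HAS'] _]. unfold Fa_poly, Fs_poly in *.
  set (P := Ts' ^ 4 - Ts ^ 4). set (Q := Ta' ^ 4 - Ta ^ 4).
  assert (HP : 0 < P) by (unfold P; generalize (pow_lt_compat Ts Ts' 4 ltac:(lra) ltac:(lia)); lra).
  (* adding the two equations eliminates [lam]: [(e - 1) P = e Q] *)
  assert (Hsum : (e - 1) * P = e * Q) by (apply (Rmult_eq_reg_l sig); [unfold P, Q; nra | lra]).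
  assert (HQP : 2 * Q < P) by nra.
  assert (Hdiff : lam * ((Ts' - Ts) - (Ta' - Ta)) = e * sig * (2 * Q - P)) by (unfold P, Q; nra).
  assert (HgapS : Ts' - Ts < Ta' - Ta).
  { apply Rnot_le_lt; intros H. assert (0 <= lam * ((Ts' - Ts) - (Ta' - Ta))) by nra.
    assert (0 < e * sig * (P - 2 * Q)) by (apply Rmult_lt_0_compat; nra). lra. }
  replace P with ((Ts' - Ts) * (Ts' ^ 3 + Ts' ^ 2 * Ts + Ts' * Ts ^ 2 + Ts ^ 3)) in HQP
    by (unfold P; ring).
  replace Q with ((Ta' - Ta) * (Ta' ^ 3 + Ta' ^ 2 * Ta + Ta' * Ta ^ 2 + Ta ^ 3)) in HQP
    by (unfold Q; ring).
  assert (0 < Ts' ^ 3 + Ts' ^ 2 * Ts + Ts' * Ts ^ 2 + Ts ^ 3)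
    by (generalize (pow_lt Ts 2 ltac:(lra)) (pow_lt Ts 3 ltac:(lra)) (pow_lt Ts' 2 ltac:(lra))
          (pow_lt Ts' 3 ltac:(lra)); intros; nra).
  nra.
Qed.

Lemma equilibrium_unique lam sig qb e Ta Ts Ta' Ts' :
  0 <= lam -> 0 < sig -> 0 < e < 2 ->
  equilibrium_region Ta Ts -> equilibrium_region Ta' Ts' ->
  Fa_poly lam sig e Ta Ts = 0 -> Fs_poly lam sig qb e Ta Ts = 0 ->
  Fa_poly lam sig e Ta' Ts' = 0 -> Fs_poly lam sig qb e Ta' Ts' = 0 -> Ta = Ta' /\ Ts = Ts'.
Proof.
  intros Hl Hs He HR HR' Fa Fs Fa' Fs'.
  destruct (Rtotal_order Ts Ts') as [H|[<-|H]].
  - exfalso; exact (no_ordered_equilibria _ _ _ _ _ _ _ _ Hl Hs He HR HR' Fa Fs Fa' Fs' H).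
  - split; [|reflexivity]. destruct HR as [[HA _] _], HR' as [[HA' _] _].
    unfold Fa_poly in *. assert (Hes : 0 < e * sig) by nra.
    destruct (Rtotal_order Ta Ta') as [H|[H|H]]; [exfalso | exact H | exfalso].
    + generalize (pow_lt_compat Ta Ta' 4 ltac:(lra) ltac:(lia)). nra.
    + generalize (pow_lt_compat Ta' Ta 4 ltac:(lra) ltac:(lia)). nra.
  - exfalso; exact (no_ordered_equilibria _ _ _ _ _ _ _ _ Hl Hs He HR' HR Fa' Fs' Fa Fs H).
Qed.

Lemma is_pseries_plus_R (u v : nat -> R) (x a b : R) :
  is_pseries u x a -> is_pseries v x b -> is_pseries (PS_plus u v) x (a + b).
Proof. exact (is_pseries_plus u v x a b). Qed.

Lemma is_pseries_scal_R (c : R) (u : nat -> R) (x a : R) :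
  is_pseries u x a -> is_pseries (PS_scal c u) x (c * a).
Proof. intros H. exact (is_pseries_scal c u x a (Rmult_comm x c) H). Qed.

Lemma is_pseries_incr_1_R (u : nat -> R) (x a : R) :
  is_pseries u x a -> is_pseries (PS_incr_1 u) x (x * a).
Proof. exact (is_pseries_incr_1 u x a). Qed.

Lemma is_pseries_eq_val (u : nat -> R) (x a b : R) : is_pseries u x a -> a = b -> is_pseries u x b.
Proof. now intros H <-. Qed.

Ltac ps_eval :=
  repeat lazymatch goal with
  | |- is_pseries (PS_quart_rem _ _) _ _ => eassumption
  | |- is_pseries (PS_plus _ _) _ _ => apply is_pseries_plus_R
  | |- is_pseries (PS_scal _ _) _ _ => apply is_pseries_scal_R
  | |- is_pseries (PS_incr_1 _) _ _ => apply is_pseries_incr_1_R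
  | |- is_pseries (PS_const _) _ _ => apply is_pseries_const
  | |- is_pseries _ _ _ => eassumption
  end.

Lemma is_pseries_quart_rem (r A : R) (u : nat -> R) (h x : R) :
  0 < r -> wbounded r u -> Rabs h < r ->
  u 0%nat = 0 -> is_pseries u h x -> is_pseries (PS_quart_rem A u) h (quart_rem A x).
Proof.
  intros Hr Hu Hh Hu0 Hx. unfold PS_quart_rem.
  assert (Hu2 := wbounded_mult0 r Hr _ _ Hu Hu).
  assert (Hu3 := wbounded_mult0 r Hr _ _ Hu Hu2).
  assert (E2 := is_pseries_mult0 r _ _ _ _ _ Hr Hu Hu Hh Hx Hx).
  assert (E3 := is_pseries_mult0 r _ _ _ _ _ Hr Hu Hu2 Hh Hx E2).
  assert (E4 := is_pseries_mult0 r _ _ _ _ _ Hr Hu Hu3 Hh Hx E3).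
  rewrite Hu0 in E2, E3, E4.
  eapply is_pseries_eq_val.
  - apply is_pseries_plus_R; [apply is_pseries_scal_R, E2|].
    apply is_pseries_plus_R; [apply is_pseries_scal_R, E3 | apply E4].
  - rewrite !PS_mult0_0. unfold quart_rem; ring.
Qed.

(* The Jacobian matrix of [(Fa_poly, Fs_poly)] with respect to [(Ta, Ts)] is
   [[-j11, j12], [j21, -j22]], and [jdet] is its determinant. *)
Definition j11 (lam sig e Ta : R) : R := lam + 8 * e * sig * Ta ^ 3.
Definition j12 (lam sig e Ts : R) : R := lam + 4 * e * sig * Ts ^ 3.
Definition j21 (lam sig e Ta : R) : R := lam + 4 * e * sig * Ta ^ 3.
Definition j22 (lam sig Ts : R) : R := lam + 4 * sig * Ts ^ 3.
Definition jdet (lam sig e Ta Ts : R) : R :=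
  j11 lam sig e Ta * j22 lam sig Ts - j12 lam sig e Ts * j21 lam sig e Ta.

Section Jacobian.

Variables lam sig e Ta Ts : R.
Hypotheses (Hlam : 0 <= lam) (Hsig : 0 < sig) (He : 0 < e).

Lemma jacobian_entries_pos : 0 < Ta -> 0 < Ts ->
  0 < j11 lam sig e Ta /\ 0 < j12 lam sig e Ts /\ 0 < j21 lam sig e Ta /\ 0 < j22 lam sig Ts.
Proof.
  intros HA HS. unfold j11, j12, j21, j22.
  assert (0 < Ta ^ 3) by (apply pow_lt; lra). assert (0 < Ts ^ 3) by (apply pow_lt; lra).
  assert (0 < e * sig) by nra. repeat split; nra.
Qed.

Lemma jdet_pos : e < 2 -> equilibrium_region Ta Ts -> 0 < jdet lam sig e Ta Ts.
Proof.
  intros He2 HR. assert (H3 := cube_lt_of_region Ta Ts HR). destruct HR as [[HA HAS] _].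
  replace (jdet lam sig e Ta Ts) with
    (4 * sig * lam * (Ts ^ 3 * (1 - e) + e * Ta ^ 3) + 16 * e * sig ^ 2 * Ts ^ 3 * Ta ^ 3 * (2 - e))
    by (unfold jdet, j11, j12, j21, j22; ring).
  assert (0 < Ta ^ 3) by (apply pow_lt; lra). assert (0 < Ts ^ 3) by (apply pow_lt; lra).
  assert (0 < Ts ^ 3 * (1 - e) + e * Ta ^ 3) by nra.
  assert (0 < e * sig ^ 2 * Ts ^ 3 * Ta ^ 3 * (2 - e))
    by (repeat apply Rmult_lt_0_compat; try apply pow_lt; lra).
  assert (0 <= sig * lam * (Ts ^ 3 * (1 - e) + e * Ta ^ 3)) by (apply Rmult_le_pos; nra).
  lra.
Qed.

(* Numerators, over [jdet], of the implicit derivatives [dTs/de] and [dTa/de]: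
   these are [- J^-1 (dF/de)] with [dF/de = (sig Ts^4 - 2 sig Ta^4, sig Ta^4)]. *)
Lemma dTs_de_num_pos : 0 < Ta < Ts ->
  0 < j21 lam sig e Ta * (sig * Ts ^ 4 - 2 * sig * Ta ^ 4) + j11 lam sig e Ta * (sig * Ta ^ 4).
Proof.
  intros HAS.
  replace (j21 lam sig e Ta * (sig * Ts ^ 4 - 2 * sig * Ta ^ 4) + j11 lam sig e Ta * (sig * Ta ^ 4))
    with (sig * (lam * (Ts ^ 4 - Ta ^ 4) + 4 * e * sig * Ta ^ 3 * Ts ^ 4))
    by (unfold j21, j11; ring).
  assert (Ta ^ 4 < Ts ^ 4) by (apply pow_lt_compat; [lra | lia]).
  assert (0 < 4 * e * sig * Ta ^ 3 * Ts ^ 4)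
    by (repeat apply Rmult_lt_0_compat; try apply pow_lt; lra).
  apply Rmult_lt_0_compat; nra.
Qed.

Lemma dTa_de_num_pos : 1 < e -> 0 < Ta < Ts ->
  0 < j22 lam sig Ts * (sig * Ts ^ 4 - 2 * sig * Ta ^ 4) + j12 lam sig e Ts * (sig * Ta ^ 4).
Proof.
  intros He1 HAS.
  replace (j22 lam sig Ts * (sig * Ts ^ 4 - 2 * sig * Ta ^ 4) + j12 lam sig e Ts * (sig * Ta ^ 4))
    with (sig * (lam * (Ts ^ 4 - Ta ^ 4) + 4 * sig * Ts ^ 3 * (Ts ^ 4 - Ta ^ 4 + (e - 1) * Ta ^ 4)))
    by (unfold j22, j12; ring).
  assert (Ta ^ 4 < Ts ^ 4) by (apply pow_lt_compat; [lra | lia]).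
  assert (0 < (e - 1) * Ta ^ 4) by (apply Rmult_lt_0_compat; [lra | apply pow_lt; lra]).
  assert (0 < 4 * sig * Ts ^ 3 * (Ts ^ 4 - Ta ^ 4 + (e - 1) * Ta ^ 4))
    by (repeat apply Rmult_lt_0_compat; try apply pow_lt; lra).
  apply Rmult_lt_0_compat; nra.
Qed.

End Jacobian.

Section Expansion.

Variables lam sig e Ta Ts : R.

Let dFa_de : R := sig * Ts ^ 4 - 2 * sig * Ta ^ 4.
Let dFs_de : R := sig * Ta ^ 4.

Definition Qa (h x y : R) : R :=
  e * sig * quart_rem Ts y - 2 * e * sig * quart_rem Ta x +
  h * (dFa_de + 4 * sig * Ts ^ 3 * y - 8 * sig * Ta ^ 3 * x
       + sig * quart_rem Ts y - 2 * sig * quart_rem Ta x).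

Definition Qs (h x y : R) : R :=
  - sig * quart_rem Ts y + e * sig * quart_rem Ta x +
  h * (dFs_de + 4 * sig * Ta ^ 3 * x + sig * quart_rem Ta x).

Lemma Fa_poly_expand h x y :
  Fa_poly lam sig (e + h) (Ta + x) (Ts + y) =
  Fa_poly lam sig e Ta Ts - j11 lam sig e Ta * x + j12 lam sig e Ts * y + Qa h x y.
Proof. unfold Fa_poly, Qa, dFa_de, j11, j12; rewrite !pow4_expand; ring. Qed.

Lemma Fs_poly_expand qb h x y :
  Fs_poly lam sig qb (e + h) (Ta + x) (Ts + y) =
  Fs_poly lam sig qb e Ta Ts + j21 lam sig e Ta * x - j22 lam sig Ts * y + Qs h x y.
Proof. unfold Fs_poly, Qs, dFs_de, j21, j22; rewrite !pow4_expand; ring. Qed.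

Definition PS_Qa : ps_map := fun a s =>
  PS_plus (PS_scal (e * sig) (PS_quart_rem Ts s))
 (PS_plus (PS_scal (- 2 * e * sig) (PS_quart_rem Ta a))
  (PS_incr_1
   (PS_plus (PS_const dFa_de)
   (PS_plus (PS_scal (4 * sig * Ts ^ 3) s)
   (PS_plus (PS_scal (- 8 * sig * Ta ^ 3) a)
   (PS_plus (PS_scal sig (PS_quart_rem Ts s)) (PS_scal (- 2 * sig) (PS_quart_rem Ta a)))))))).

Definition PS_Qs : ps_map := fun a s =>
  PS_plus (PS_scal (- sig) (PS_quart_rem Ts s))
 (PS_plus (PS_scal (e * sig) (PS_quart_rem Ta a))
  (PS_incr_1
   (PS_plus (PS_const dFs_de)
   (PS_plus (PS_scal (4 * sig * Ta ^ 3) a) (PS_scal sig (PS_quart_rem Ta a)))))).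

(* By [Fa_poly_expand] and [Fs_poly_expand], the deviation [(x, y)] of an
   equilibrium at parameter [e + h] from [(Ta, Ts)] solves [J (x, y) + (Qa, Qs) = 0],
   i.e. [(x, y) = - J^-1 (Qa, Qs)]; [Phi_a], [Phi_s] are this map on series in [h]. *)
Definition Phi_a : ps_map := fun a s =>
  PS_scal (/ jdet lam sig e Ta Ts)
    (PS_plus (PS_scal (j22 lam sig Ts) (PS_Qa a s)) (PS_scal (j12 lam sig e Ts) (PS_Qs a s))).

Definition Phi_s : ps_map := fun a s =>
  PS_scal (/ jdet lam sig e Ta Ts)
    (PS_plus (PS_scal (j21 lam sig e Ta) (PS_Qa a s)) (PS_scal (j11 lam sig e Ta) (PS_Qs a s))).

Lemma Phi_raising : ps_raising Phi_a /\ ps_raising Phi_s.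
Proof. unfold Phi_a, Phi_s, PS_Qa, PS_Qs; split; ps_closure. Qed.

Lemma Phi_small : ps_small Phi_a /\ ps_small Phi_s.
Proof. unfold Phi_a, Phi_s, PS_Qa, PS_Qs; split; ps_closure. Qed.

Lemma is_pseries_Q (r : R) (a s : nat -> R) (h x y : R) :
  0 < r -> wbounded r a -> wbounded r s -> Rabs h < r ->
  a 0%nat = 0 -> s 0%nat = 0 -> is_pseries a h x -> is_pseries s h y ->
  is_pseries (PS_Qa a s) h (Qa h x y) /\ is_pseries (PS_Qs a s) h (Qs h x y).
Proof.
  intros Hr Ha Hs Hh Ha0 Hs0 Hx Hy.
  assert (HqA := is_pseries_quart_rem r Ta a h x Hr Ha Hh Ha0 Hx).
  assert (HqS := is_pseries_quart_rem r Ts s h y Hr Hs Hh Hs0 Hy).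
  split; (eapply is_pseries_eq_val; [unfold PS_Qa, PS_Qs; ps_eval | unfold Qa, Qs; ring]).
Qed.

Lemma PS_Q_0 a s : PS_Qa a s 0%nat = 0 /\ PS_Qs a s 0%nat = 0.
Proof.
  unfold PS_Qa, PS_Qs; rewrite !PS_plus_R, !PS_scal_R, !PS_quart_rem_0, !PS_incr_1_R.
  split; ring.
Qed.

Lemma PS_Q_1 a s : a 0%nat = 0 -> s 0%nat = 0 ->
  PS_Qa a s 1%nat = dFa_de /\ PS_Qs a s 1%nat = dFs_de.
Proof.
  intros Ha0 Hs0. unfold PS_Qa, PS_Qs.
  rewrite !PS_plus_R, !PS_scal_R, !PS_quart_rem_1, !PS_incr_1_R, !PS_plus_R, !PS_scal_R,
    !PS_quart_rem_0, Ha0, Hs0. simpl; split; ring.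
Qed.

Definition branch_a : nat -> R := fix_a Phi_a Phi_s.
Definition branch_s : nat -> R := fix_s Phi_a Phi_s.

Lemma branch_eq n :
  Phi_a branch_a branch_s n = branch_a n /\ Phi_s branch_a branch_s n = branch_s n.
Proof. exact (fix_eq Phi_a Phi_s (proj1 Phi_raising) (proj2 Phi_raising) n). Qed.

Lemma branch_0 : branch_a 0%nat = 0 /\ branch_s 0%nat = 0.
Proof.
  destruct (branch_eq 0) as [<- <-]. destruct (PS_Q_0 branch_a branch_s) as [Ha Hs].
  unfold Phi_a, Phi_s; rewrite !PS_scal_R, !PS_plus_R, !PS_scal_R, Ha, Hs; split; ring.
Qed.

Lemma branch_1 :
  branch_a 1%nat = / jdet lam sig e Ta Ts * (j22 lam sig Ts * dFa_de + j12 lam sig e Ts * dFs_de) /\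
  branch_s 1%nat = / jdet lam sig e Ta Ts * (j21 lam sig e Ta * dFa_de + j11 lam sig e Ta * dFs_de).
Proof.
  destruct branch_0 as [Ha0 Hs0]. destruct (PS_Q_1 _ _ Ha0 Hs0) as [Ha Hs].
  destruct (branch_eq 1) as [<- <-].
  unfold Phi_a, Phi_s; rewrite !PS_scal_R, !PS_plus_R, !PS_scal_R, Ha, Hs; split; ring.
Qed.

Lemma branch_wnorm_le d : 0 < d -> exists r, 0 < r /\
  forall N, wnorm r N branch_a <= d /\ wnorm r N branch_s <= d.
Proof.
  intros Hd. destruct Phi_small as [[Ka [HKa Ha]] [Ks [HKs Hs]]].
  (* [Phi] maps the [t]-ball into itself once [(Ka + Ks) (t^2 + r) <= t]: take [r = t^2] *)
  set (t := Rmin (Rmin d 1) (/ (2 * (Ka + Ks + 1)))).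
  assert (Ht0 : 0 < t) by (apply Rmin_pos; [apply Rmin_pos | apply Rinv_0_lt_compat]; lra).
  assert (Htd : t <= d) by (eapply Rle_trans; [apply Rmin_l | apply Rmin_l]).
  assert (Ht1 : t <= 1) by (eapply Rle_trans; [apply Rmin_l | apply Rmin_r]).
  assert (HtK : 2 * (Ka + Ks) * t <= 1).
  { assert (t <= / (2 * (Ka + Ks + 1))) by apply Rmin_r.
    apply (Rmult_le_compat_l (2 * (Ka + Ks + 1))) in H; [|lra].
    rewrite Rinv_r in H by lra. nra. }
  exists (t ^ 2); split; [apply pow_lt; exact Ht0|].
  assert (Hr : 0 <= t ^ 2) by apply pow2_ge_0.
  assert (Hball : forall M a s, wnorm (t ^ 2) M a <= t -> wnorm (t ^ 2) M s <= t ->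
            wnorm (t ^ 2) M (Phi_a a s) <= t /\ wnorm (t ^ 2) M (Phi_s a s) <= t).
  { intros M a s Hwa Hws.
    generalize (Ha (t ^ 2) M t a s Hr (conj (Rlt_le _ _ Ht0) Ht1) Hwa Hws)
               (Hs (t ^ 2) M t a s Hr (conj (Rlt_le _ _ Ht0) Ht1) Hwa Hws).
    simpl; nra. }
  intros N; destruct (wnorm_fix Phi_a Phi_s (proj1 Phi_raising) (proj2 Phi_raising)
                        (t ^ 2) t (Rlt_le _ _ Ht0) Hball N).
  split; unfold branch_a, branch_s; lra.
Qed.

Lemma branch_solves (r h x y : R) : jdet lam sig e Ta Ts <> 0 -> 0 < r ->
  wbounded r branch_a -> wbounded r branch_s -> Rabs h < r ->
  is_pseries branch_a h x -> is_pseries branch_s h y ->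
  Fa_poly lam sig (e + h) (Ta + x) (Ts + y) = Fa_poly lam sig e Ta Ts /\
  forall qb, Fs_poly lam sig qb (e + h) (Ta + x) (Ts + y) = Fs_poly lam sig qb e Ta Ts.
Proof.
  intros HD Hr Ha Hs Hh Hx Hy. destruct branch_0 as [Ha0 Hs0].
  destruct (is_pseries_Q r _ _ h x y Hr Ha Hs Hh Ha0 Hs0 Hx Hy) as [HQa HQs].
  assert (Ex : x = / jdet lam sig e Ta Ts *
                   (j22 lam sig Ts * Qa h x y + j12 lam sig e Ts * Qs h x y)).
  { rewrite <- (is_pseries_unique _ _ _ Hx) at 1; apply is_pseries_unique.
    eapply is_pseries_ext; [intros n; apply (branch_eq n)|].
    unfold Phi_a; ps_eval. }
  assert (Ey : y = / jdet lam sig e Ta Ts *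
                   (j21 lam sig e Ta * Qa h x y + j11 lam sig e Ta * Qs h x y)).
  { rewrite <- (is_pseries_unique _ _ _ Hy) at 1; apply is_pseries_unique.
    eapply is_pseries_ext; [intros n; apply (branch_eq n)|].
    unfold Phi_s; ps_eval. }
  set (qa := Qa h x y) in *. set (qs := Qs h x y) in *.
  assert (La : - j11 lam sig e Ta * x + j12 lam sig e Ts * y + qa = 0).
  { rewrite Ex, Ey. unfold jdet in *. field; exact HD. }
  assert (Ls : j21 lam sig e Ta * x - j22 lam sig Ts * y + qs = 0).
  { rewrite Ex, Ey. unfold jdet in *. field; exact HD. }
  split; [|intros qb]; [rewrite Fa_poly_expand | rewrite Fs_poly_expand]; fold qa qs; lra.
Qed.

Lemma local_branch d : jdet lam sig e Ta Ts <> 0 -> 0 < d -> exists r, 0 < r /\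
  Rbar_le r (CV_radius branch_a) /\ Rbar_le r (CV_radius branch_s) /\
  forall h, Rabs h < r -> exists x y : R,
    is_pseries branch_a h x /\ is_pseries branch_s h y /\ Rabs x <= d /\ Rabs y <= d /\
    Fa_poly lam sig (e + h) (Ta + x) (Ts + y) = Fa_poly lam sig e Ta Ts /\
    forall qb, Fs_poly lam sig qb (e + h) (Ta + x) (Ts + y) = Fs_poly lam sig qb e Ta Ts.
Proof.
  intros HD Hd. destruct (branch_wnorm_le d Hd) as [r [Hr Hw]].
  assert (Hba : wbounded r branch_a) by (exists d; intros N; apply Hw).
  assert (Hbs : wbounded r branch_s) by (exists d; intros N; apply Hw).
  exists r. split; [exact Hr|].
  split; [apply CV_radius_ge_wbounded; assumption|].
  split; [apply CV_radius_ge_wbounded; assumption|].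
  intros h Hh.
  assert (Hx := PSeries_correct branch_a h
                  (CV_radius_inside _ _ (CV_radius_gt_wbounded r Hr _ h Hba Hh))).
  assert (Hy := PSeries_correct branch_s h
                  (CV_radius_inside _ _ (CV_radius_gt_wbounded r Hr _ h Hbs Hh))).
  exists (PSeries branch_a h), (PSeries branch_s h).
  split; [exact Hx|]. split; [exact Hy|].
  split; [apply (is_pseries_abs_le branch_a h _ r); [exact Hx | lra | apply Hw]|].
  split; [apply (is_pseries_abs_le branch_s h _ r); [exact Hy | lra | apply Hw]|].
  exact (branch_solves r h _ _ HD Hr Hba Hbs Hh Hx Hy).
Qed.

End Expansion.

Lemma quad_form_le al be ga x y : 0 < al -> 0 < ga -> be ^ 2 < al * ga ->
  - al * x ^ 2 + 2 * be * x * y - ga * y ^ 2 <=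
  - ((al * ga - be ^ 2) / (al + ga)) * (x ^ 2 + y ^ 2).
Proof.
  intros Ha Hg Hb. set (c := (al * ga - be ^ 2) / (al + ga)).
  assert (Hc : c * (al + ga) = al * ga - be ^ 2) by (unfold c; field; lra).
  (* [(al - c)(ga - c) - be^2 = c^2], so the shifted form is a sum of squares *)
  assert (Hsq : (al - c) * (ga - c) - be ^ 2 = c ^ 2)
    by (apply (Rmult_eq_reg_r (al + ga)); [nra | lra]).
  assert (Hac : 0 < al - c) by (apply (Rmult_lt_reg_r (al + ga)); [lra | nra]).
  assert (0 <= (al - c) * ((al - c) * x ^ 2 - 2 * be * x * y + (ga - c) * y ^ 2)).
  { replace ((al - c) * ((al - c) * x ^ 2 - 2 * be * x * y + (ga - c) * y ^ 2))
      with (((al - c) * x - be * y) ^ 2 + ((al - c) * (ga - c) - be ^ 2) * y ^ 2) by ring.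
    rewrite Hsq. generalize (pow2_ge_0 ((al - c) * x - be * y)) (pow2_ge_0 (c * y)). 
    rewrite Rpow_mult_distr; lra. }
  assert (0 <= (al - c) * x ^ 2 - 2 * be * x * y + (ga - c) * y ^ 2)
    by (apply (Rmult_le_reg_l (al - c)); [exact Hac | rewrite Rmult_0_r; assumption]).
  lra.
Qed.

Lemma quart_rem_abs_le A x : 0 <= A -> Rabs x <= 1 ->
  Rabs (quart_rem A x) <= (6 * A ^ 2 + 4 * A + 1) * x ^ 2.
Proof.
  intros HA Hx. apply Rabs_le_between in Hx.
  replace (quart_rem A x) with (x ^ 2 * (6 * A ^ 2 + 4 * A * x + x ^ 2))
    by (unfold quart_rem; ring).
  rewrite Rabs_mult, (Rabs_pos_eq (x ^ 2)) by apply pow2_ge_0. rewrite Rmult_comm.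
  apply Rmult_le_compat_r; [apply pow2_ge_0|].
  assert (x ^ 2 <= 1) by (simpl; nra). generalize (pow2_ge_0 x); intros.
  apply Rabs_le; split; nra.
Qed.

Lemma Q_at_0_quadratic sig e Ta Ts : 0 < sig -> 0 < e -> 0 <= Ta -> 0 <= Ts ->
  exists K, 0 <= K /\ forall x y, Rabs x <= 1 -> Rabs y <= 1 ->
    Rabs (Qa sig e Ta Ts 0 x y) <= K * (x ^ 2 + y ^ 2) /\
    Rabs (Qs sig e Ta Ts 0 x y) <= K * (x ^ 2 + y ^ 2).
Proof.
  intros Hs He HA HS.
  set (CA := 6 * Ta ^ 2 + 4 * Ta + 1). set (CS := 6 * Ts ^ 2 + 4 * Ts + 1).
  assert (0 < CA) by (unfold CA; generalize (pow2_ge_0 Ta); lra).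
  assert (0 < CS) by (unfold CS; generalize (pow2_ge_0 Ts); lra).
  assert (0 < e * sig) by nra.
  exists (3 * (1 + e) * sig * (CA + CS)); split; [nra|]. intros x y Hx Hy.
  generalize (quart_rem_abs_le Ta x HA Hx) (quart_rem_abs_le Ts y HS Hy).
  fold CA CS; intros HqA HqS.
  set (M := (CA + CS) * (x ^ 2 + y ^ 2)).
  generalize (pow2_ge_0 x) (pow2_ge_0 y); intros.
  assert (Hu : Rabs (quart_rem Ts y) <= M) by (unfold M; nra).
  assert (Hv : Rabs (quart_rem Ta x) <= M) by (unfold M; nra).
  replace (3 * (1 + e) * sig * (CA + CS) * (x ^ 2 + y ^ 2)) with (3 * (1 + e) * sig * M)
    by (unfold M; ring).
  assert (HM : 0 <= M) by (generalize (Rabs_pos (quart_rem Ta x)); lra).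
  assert (e * sig * Rabs (quart_rem Ts y) <= e * sig * M) by (apply Rmult_le_compat_l; lra).
  assert (e * sig * Rabs (quart_rem Ta x) <= e * sig * M) by (apply Rmult_le_compat_l; lra).
  assert (sig * Rabs (quart_rem Ts y) <= sig * M) by (apply Rmult_le_compat_l; lra).
  assert (0 <= sig * M) by (apply Rmult_le_pos; lra).
  assert (0 <= e * sig * M) by (apply Rmult_le_pos; lra).
  unfold Qa, Qs; rewrite !Rmult_0_l, !Rplus_0_r.
  split; (eapply Rle_trans; [apply Rabs_triang|]);
    rewrite ?Rabs_Ropp, !Rabs_mult, ?Rabs_Ropp, ?(Rabs_pos_eq 2), (Rabs_pos_eq e),
      (Rabs_pos_eq sig) by lra;
    nra.
Qed.

Lemma jacobian_form_neg_def lam sig e Ta Ts :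
  0 <= lam -> 0 < sig -> 0 < e < 2 -> equilibrium_region Ta Ts ->
  exists c, 0 < c /\ forall x y,
    j21 lam sig e Ta * x * (- j11 lam sig e Ta * x + j12 lam sig e Ts * y) +
    j12 lam sig e Ts * y * (j21 lam sig e Ta * x - j22 lam sig Ts * y) <= - c * (x ^ 2 + y ^ 2).
Proof.
  intros Hl Hs He HR.
  assert (HD := jdet_pos lam sig e Ta Ts Hl Hs (proj1 He) (proj2 He) HR).
  destruct HR as [[HA HAS] _].
  destruct (jacobian_entries_pos lam sig e Ta Ts Hl Hs (proj1 He) HA ltac:(lra))
    as [H11 [H12 [H21 H22]]].
  unfold jdet in HD.
  set (b11 := j11 lam sig e Ta) in *. set (b12 := j12 lam sig e Ts) in *.
  set (b21 := j21 lam sig e Ta) in *. set (b22 := j22 lam sig Ts) in *.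
  assert (Hb : (b12 * b21) ^ 2 < b21 * b11 * (b12 * b22)).
  { assert (0 < b12 * b21 * (b11 * b22 - b12 * b21)) by (apply Rmult_lt_0_compat; nra). nra. }
  exists ((b21 * b11 * (b12 * b22) - (b12 * b21) ^ 2) / (b21 * b11 + b12 * b22)).
  split; [apply Rdiv_lt_0_compat; nra|]. intros x y.
  generalize (quad_form_le (b21 * b11) (b12 * b21) (b12 * b22) x y ltac:(nra) ltac:(nra) Hb).
  lra.
Qed.

Lemma mul_le_of_abs_le b x q rho M : 0 <= b -> Rabs x <= rho -> Rabs q <= M ->
  b * x * q <= b * (rho * M).
Proof.
  intros Hb Hx Hq. eapply Rle_trans; [apply Rle_abs|].
  rewrite !Rabs_mult, (Rabs_pos_eq b), Rmult_assoc by exact Hb.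
  apply Rmult_le_compat_l; [exact Hb|]. apply Rmult_le_compat; try apply Rabs_pos; assumption.
Qed.

Lemma lyapunov_ineq lam sig qb e Ta Ts :
  0 <= lam -> 0 < sig -> 0 < e < 2 -> equilibrium_region Ta Ts ->
  Fa_poly lam sig e Ta Ts = 0 -> Fs_poly lam sig qb e Ta Ts = 0 ->
  exists c rho, 0 < c /\ 0 < rho /\ forall x y, Rabs x <= rho -> Rabs y <= rho ->
    j21 lam sig e Ta * x * Fa_poly lam sig e (Ta + x) (Ts + y) +
    j12 lam sig e Ts * y * Fs_poly lam sig qb e (Ta + x) (Ts + y) <= - c * (x ^ 2 + y ^ 2).
Proof.
  intros Hl Hs He HR Fa Fs.
  destruct (jacobian_form_neg_def lam sig e Ta Ts Hl Hs He HR) as [c0 [Hc0 Hlin]].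
  destruct HR as [[HA HAS] _].
  destruct (jacobian_entries_pos lam sig e Ta Ts Hl Hs (proj1 He) HA ltac:(lra))
    as [_ [H12 [H21 _]]].
  destruct (Q_at_0_quadratic sig e Ta Ts Hs (proj1 He) ltac:(lra) ltac:(lra)) as [K [HK HQ]].
  set (b12 := j12 lam sig e Ts) in *. set (b21 := j21 lam sig e Ta) in *.
  (* the quadratic remainders cost at most [rho (b21 + b12) K (x^2 + y^2) <= c0/2 (x^2 + y^2)] *)
  set (rho := Rmin 1 (c0 / (2 * (b21 + b12) * K + 1))).
  assert (Hrho : 0 < rho) by (apply Rmin_pos; [lra | apply Rdiv_lt_0_compat; nra]).
  assert (HrhoK : rho * ((b21 + b12) * K) <= c0 / 2).
  { assert (rho <= c0 / (2 * (b21 + b12) * K + 1)) by apply Rmin_r.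
    apply (Rmult_le_compat_r (2 * (b21 + b12) * K + 1)) in H; [|nra].
    replace (c0 / (2 * (b21 + b12) * K + 1) * (2 * (b21 + b12) * K + 1)) with c0 in H
      by (field; nra).
    nra. }
  exists (c0 / 2), rho; split; [lra | split; [exact Hrho|]]. intros x y Hx Hy.
  assert (Ea := Fa_poly_expand lam sig e Ta Ts 0 x y).
  assert (Es := Fs_poly_expand lam sig e Ta Ts qb 0 x y).
  rewrite Rplus_0_r in Ea, Es. rewrite Ea, Es, Fa, Fs.
  assert (Hrho1 : rho <= 1) by apply Rmin_l.
  destruct (HQ x y ltac:(lra) ltac:(lra)) as [HQa HQs].
  generalize (Hlin x y) (mul_le_of_abs_le b21 x _ rho _ ltac:(lra) Hx HQa)
    (mul_le_of_abs_le b12 y _ rho _ ltac:(lra) Hy HQs) (pow2_ge_0 x) (pow2_ge_0 y).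
  fold b12 b21. nra.
Qed.

Lemma is_derive_weighted_sq (f : R -> R) c a u df : is_derive f u df ->
  is_derive (fun v => c * (f v - a) ^ 2) u (2 * c * (f u - a) * df).
Proof.
  intros Hf. replace (2 * c * (f u - a) * df) with (scal df (2 * c * (f u - a) ^ 1))
    by (change (df * (2 * c * (f u - a) ^ 1) = 2 * c * (f u - a) * df); ring).
  apply (is_derive_comp (fun z => c * (z - a) ^ 2) f); [|exact Hf].
  auto_derive; [exact I | simpl; ring].
Qed.

Lemma continuous_weighted_sq (f : R -> R) c a u : continuous f u ->
  continuous (fun v => c * (f v - a) ^ 2) u.
Proof.
  intros Hf. apply (continuous_comp f (fun z => c * (z - a) ^ 2)); [exact Hf|].
  apply (ex_derive_continuous (K := R_AbsRing) (V := R_NormedModule)). auto_derive; exact I.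
Qed.

Lemma weighted_sq_bounds p q x y : 0 < p -> 0 < q ->
  Rmin p q * (x ^ 2 + y ^ 2) <= p * x ^ 2 + q * y ^ 2 <= (p + q) * (x ^ 2 + y ^ 2).
Proof.
  intros Hp Hq. generalize (Rmin_l p q) (Rmin_r p q) (pow2_ge_0 x) (pow2_ge_0 y); intros.
  split; nra.
Qed.

Lemma dist2_le_of_weighted p q k a s a0 s0 : 0 < p -> 0 < q -> 0 <= k ->
  p * a ^ 2 + q * s ^ 2 <= k ^ 2 * (p * a0 ^ 2 + q * s0 ^ 2) ->
  sqrt (a ^ 2 + s ^ 2) <= sqrt ((p + q) / Rmin p q) * k * sqrt (a0 ^ 2 + s0 ^ 2).
Proof.
  intros Hp Hq Hk H.
  assert (Hm : 0 < Rmin p q) by (apply Rmin_pos; lra).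
  destruct (weighted_sq_bounds p q a s Hp Hq) as [Hlo _].
  destruct (weighted_sq_bounds p q a0 s0 Hp Hq) as [_ Hhi].
  assert (Hn0 : 0 <= a0 ^ 2 + s0 ^ 2) by (generalize (pow2_ge_0 a0) (pow2_ge_0 s0); lra).
  assert (Hq' : 0 <= (p + q) / Rmin p q) by (apply Rlt_le, Rdiv_lt_0_compat; lra).
  rewrite <- (sqrt_pow2 k Hk), <- !sqrt_mult_alt
    by (first [exact Hq' | apply Rmult_le_pos; [exact Hq' | apply pow2_ge_0]]).
  apply sqrt_le_1_alt.
  apply (Rmult_le_reg_l (Rmin p q) _ _ Hm).
  replace (Rmin p q * ((p + q) / Rmin p q * k ^ 2 * (a0 ^ 2 + s0 ^ 2)))
    with (k ^ 2 * ((p + q) * (a0 ^ 2 + s0 ^ 2))) by (field; lra).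
  generalize (pow2_ge_0 k); nra.
Qed.

Lemma abs_lt_of_weighted_sq_lt p p' r x y : 0 < p -> 0 < p' -> 0 < r ->
  p * x ^ 2 + p' * y ^ 2 < Rmin p p' * r ^ 2 -> Rabs x < r /\ Rabs y < r.
Proof.
  intros Hp Hp' Hr H. destruct (weighted_sq_bounds p p' x y Hp Hp') as [Hlo _].
  assert (Hm : 0 < Rmin p p') by (apply Rmin_pos; lra).
  assert (Hn : x ^ 2 + y ^ 2 < r ^ 2) by (apply (Rmult_lt_reg_l (Rmin p p')); lra).
  assert (Habs : forall z, z ^ 2 < r ^ 2 -> Rabs z < r).
  { intros z Hz; apply Rnot_le_lt; intros Hle.
    assert (r ^ 2 <= Rabs z ^ 2) by (apply pow_incr; lra). rewrite pow2_abs in *; lra. }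
  generalize (pow2_ge_0 x) (pow2_ge_0 y); intros.
  split; apply Habs; lra.
Qed.

Lemma weighted_sq_lt_of_dist2 p p' L a s A S : 0 < p -> 0 < p' -> 0 < L ->
  dist2 a s A S < sqrt (L / (p + p')) -> p * (a - A) ^ 2 + p' * (s - S) ^ 2 < L.
Proof.
  intros Hp Hp' HL Hd. destruct (weighted_sq_bounds p p' (a - A) (s - S) Hp Hp') as [_ Hhi].
  assert (Hn : (a - A) ^ 2 + (s - S) ^ 2 < L / (p + p')).
  { apply Rnot_le_lt; intros Hle. apply sqrt_le_1_alt in Hle. unfold dist2 in Hd; lra. }
  apply (Rmult_lt_compat_l (p + p')) in Hn; [|lra].
  replace ((p + p') * (L / (p + p'))) with L in Hn by (field; lra). lra.
Qed.

(* A quadratic Lyapunov function [V = (ka/gs) (xa - Ta)^2 + (ks/ga) (xs - Ts)^2]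
   satisfies [V' = 2/(ga gs) (ka (xa - Ta) Fa + ks (xs - Ts) Fs)]. *)
Lemma exp_stable_of_lyapunov ga gs lam sig q (beta : R -> R) e Ta Ts ka ks c r :
  0 < ga -> 0 < gs -> 0 < ka -> 0 < ks -> 0 < c -> 0 < r ->
  (forall a s, Rabs (a - Ta) < r -> Rabs (s - Ts) < r ->
     ka * (a - Ta) * Fa lam sig e a s + ks * (s - Ts) * Fs lam sig q beta e a s
     <= - c * ((a - Ta) ^ 2 + (s - Ts) ^ 2)) ->
  exp_stable ga gs lam sig q beta e Ta Ts.
Proof.
  intros Hga Hgs Hka Hks Hc Hr Hly.
  set (p := ka / gs). set (p' := ks / ga).
  assert (Hp : 0 < p) by (apply Rdiv_lt_0_compat; lra).
  assert (Hp' : 0 < p') by (apply Rdiv_lt_0_compat; lra).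
  assert (Hm : 0 < Rmin p p') by (apply Rmin_pos; lra).
  set (L := Rmin p p' * r ^ 2).
  assert (HL : 0 < L) by (apply Rmult_lt_0_compat; [lra | apply pow_lt; lra]).
  set (mu := c / (ga * gs * (p + p'))).
  assert (Hmu : 0 < mu) by (apply Rdiv_lt_0_compat; [lra | repeat apply Rmult_lt_0_compat; lra]).
  exists (sqrt (L / (p + p'))), (sqrt ((p + p') / Rmin p p')), mu.
  split; [apply sqrt_lt_R0, Rdiv_lt_0_compat; lra|].
  split; [apply sqrt_lt_R0, Rdiv_lt_0_compat; lra|].
  split; [exact Hmu|].
  intros T xa xs HT [Hcont Hder] Hd0 t Ht.
  set (V := fun u => p * (xa u - Ta) ^ 2 + p' * (xs u - Ts) ^ 2).
  set (dV := fun u => 2 * p * (xa u - Ta) * (/ ga * Fa lam sig e (xa u) (xs u)) +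
                      2 * p' * (xs u - Ts) * (/ gs * Fs lam sig q beta e (xa u) (xs u))).
  assert (Hsign : forall u, 0 < u < T -> V u < L -> dV u + 2 * mu * V u <= 0).
  { intros u Hu HV. destruct (abs_lt_of_weighted_sq_lt p p' r _ _ Hp Hp' Hr HV) as [Hx Hy].
    destruct (weighted_sq_bounds p p' (xa u - Ta) (xs u - Ts) Hp Hp') as [_ Hhi].
    assert (HdV : dV u = 2 / (ga * gs) *
      (ka * (xa u - Ta) * Fa lam sig e (xa u) (xs u) +
       ks * (xs u - Ts) * Fs lam sig q beta e (xa u) (xs u)))
      by (unfold dV, p, p'; field; lra).
    assert (dV u <= 2 / (ga * gs) * (- c * ((xa u - Ta) ^ 2 + (xs u - Ts) ^ 2)))
      by (rewrite HdV; apply Rmult_le_compat_l; [apply Rlt_le, Rdiv_lt_0_compat; nra | auto]).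
    assert (2 * mu * V u <= 2 / (ga * gs) * (c * ((xa u - Ta) ^ 2 + (xs u - Ts) ^ 2))).
    { replace (2 / (ga * gs) * (c * ((xa u - Ta) ^ 2 + (xs u - Ts) ^ 2)))
        with (2 * mu * ((p + p') * ((xa u - Ta) ^ 2 + (xs u - Ts) ^ 2)))
        by (unfold mu; field; repeat split; lra).
      apply Rmult_le_compat_l; [lra | exact Hhi]. }
    lra. }
  assert (Hdecay : V t * exp (2 * mu * t) <= V 0).
  { apply (lyapunov_decay V dV T L mu); [lra | | | | | exact Hsign | exact Ht].
    - intros u. unfold V. generalize (pow2_ge_0 (xa u - Ta)) (pow2_ge_0 (xs u - Ts)); nra.
    - exact (weighted_sq_lt_of_dist2 p p' L _ _ _ _ Hp Hp' HL Hd0).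
    - intros u Hu. destruct (Hcont u Hu) as [Ca Cs].
      apply (continuous_plus (fun v => p * (xa v - Ta) ^ 2) (fun v => p' * (xs v - Ts) ^ 2));
        apply continuous_weighted_sq; assumption.
    - intros u Hu. destruct (Hder u Hu) as [Da Ds].
      apply (is_derive_plus (fun v => p * (xa v - Ta) ^ 2) (fun v => p' * (xs v - Ts) ^ 2));
        apply is_derive_weighted_sq; assumption. }
  unfold dist2. apply dist2_le_of_weighted; [exact Hp | exact Hp' | apply Rlt_le, exp_pos |].
  replace (exp (- mu * t) ^ 2) with (/ exp (2 * mu * t))
    by (rewrite <- exp_Ropp; simpl; rewrite Rmult_1_r, <- exp_plus; f_equal; ring).
  assert (Hexp : 0 < exp (2 * mu * t)) by apply exp_pos.
  apply (Rmult_le_reg_r (exp (2 * mu * t)) _ _ Hexp).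
  replace (/ exp (2 * mu * t) * (p * (xa 0 - Ta) ^ 2 + p' * (xs 0 - Ts) ^ 2) * exp (2 * mu * t))
    with (V 0) by (unfold V; field; lra).
  exact Hdecay.
Qed.

Lemma exp_stable_of_equilibrium ga gs lam sig q (beta : R -> R) bw e Ta Ts g :
  0 < ga -> 0 < gs -> 0 <= lam -> 0 < sig -> 0 < e < 2 -> equilibrium_region Ta Ts -> 0 < g ->
  (forall y, Rabs y < g -> beta (Ts + y) = bw) ->
  Fa_poly lam sig e Ta Ts = 0 -> Fs_poly lam sig (q * bw) e Ta Ts = 0 ->
  exp_stable ga gs lam sig q beta e Ta Ts.
Proof.
  intros Hga Hgs Hl Hs He HR Hg Hbeta HFa HFs.
  destruct (lyapunov_ineq lam sig (q * bw) e Ta Ts Hl Hs He HR HFa HFs)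
    as [c [rho [Hc [Hrho Hly]]]].
  destruct HR as [[HA HAS] _].
  destruct (jacobian_entries_pos lam sig e Ta Ts Hl Hs (proj1 He) HA ltac:(lra))
    as [_ [H12 [H21 _]]].
  (* within [r] of the equilibrium the temperatures stay positive and [beta] stays [bw] *)
  set (r := Rmin rho (Rmin (Ta / 2) (g / 2))).
  assert (Hr : 0 < r) by (repeat apply Rmin_pos; lra).
  assert (Hr_rho : r <= rho) by apply Rmin_l.
  assert (Hr_A : r <= Ta / 2) by (eapply Rle_trans; [apply Rmin_r | apply Rmin_l]).
  assert (Hr_g : r <= g / 2) by (eapply Rle_trans; [apply Rmin_r | apply Rmin_r]).
  apply (exp_stable_of_lyapunov _ _ _ _ _ _ _ _ _ (j21 lam sig e Ta) (j12 lam sig e Ts) c r);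
    try assumption.
  intros a s Ha Hs'.
  assert (Ea : a = Ta + (a - Ta)) by ring. assert (Es : s = Ts + (s - Ts)) by ring.
  set (x := a - Ta) in *. set (y := s - Ts) in *.
  apply Rabs_lt_between in Ha, Hs'.
  rewrite Fa_eq_poly, Fs_eq_poly by lra. rewrite Ea, Es, Hbeta by (apply Rabs_lt_between; lra).
  apply Hly; apply Rabs_le; lra.
Qed.

Definition regime_coalbedo (w : bool) (bm bp : R) : R := if w then bp else bm.

Lemma coalbedo_regime Tsm Tsp bm bp w s : Tsm < Tsp -> regime w Tsm Tsp s ->
  coalbedo Tsm Tsp bm bp s = regime_coalbedo w bm bp.
Proof.
  unfold coalbedo, regime, regime_coalbedo; intros HT Hs.
  destruct w; destruct (Rle_dec s Tsm); try destruct (Rle_dec Tsp s); lra.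
Qed.

Lemma regime_open w Tsm Tsp s : regime w Tsm Tsp s ->
  exists g, 0 < g /\ forall y, Rabs y < g -> regime w Tsm Tsp (s + y).
Proof.
  unfold regime; destruct w; intros Hs;
    [exists (s - Tsp) | exists (Tsm - s)];
    (split; [lra | intros y Hy; apply Rabs_lt_between in Hy; lra]).
Qed.

Section Model.

Variables (sig q Tsm Tsp bm bp lam : R) (w : bool).
Hypotheses (Hsig : 0 < sig) (Hq : 0 < q) (HTs : Tsm < Tsp)
  (Hbm : 0 < bm) (Hb : bm < bp) (Hlam : 0 <= lam).

Definition regime_equilibrium (e a s : R) : Prop :=
  is_equilibrium lam sig q (coalbedo Tsm Tsp bm bp) e a s /\ regime w Tsm Tsp s.

Let qb := q * regime_coalbedo w bm bp.

Lemma regime_equilibrium_poly e a s : 0 < e -> regime_equilibrium e a s ->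
  equilibrium_region a s /\ Fa_poly lam sig e a s = 0 /\ Fs_poly lam sig qb e a s = 0.
Proof.
  intros He [[Ha [Hs [HFa HFs]]] Hreg].
  rewrite Fa_eq_poly in HFa by assumption.
  rewrite Fs_eq_poly, (coalbedo_regime _ _ _ _ w s HTs Hreg) in HFs by assumption.
  assert (0 < qb) by (unfold qb, regime_coalbedo; destruct w; apply Rmult_lt_0_compat; lra).
  split; [|split; assumption].
  exact (equilibrium_region_of_eq lam sig qb e a s Hlam Hsig He H Ha Hs HFa HFs).
Qed.

Lemma regime_equilibrium_of_poly e a s : 0 <= a -> 0 <= s -> regime w Tsm Tsp s ->
  Fa_poly lam sig e a s = 0 -> Fs_poly lam sig qb e a s = 0 -> regime_equilibrium e a s.
Proof.
  intros Ha Hs Hreg HFa HFs. split; [|exact Hreg].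
  repeat split; try assumption.
  - rewrite Fa_eq_poly; assumption.
  - rewrite Fs_eq_poly, (coalbedo_regime _ _ _ _ w s HTs Hreg); assumption.
Qed.

Lemma regime_equilibrium_unique e a s a' s' : 0 < e < 2 ->
  regime_equilibrium e a s -> regime_equilibrium e a' s' -> a = a' /\ s = s'.
Proof.
  intros He H H'.
  destruct (regime_equilibrium_poly e a s (proj1 He) H) as [HR [HFa HFs]].
  destruct (regime_equilibrium_poly e a' s' (proj1 He) H') as [HR' [HFa' HFs']].
  exact (equilibrium_unique lam sig qb e a s a' s' Hlam Hsig He HR HR' HFa HFs HFa' HFs').
Qed.

Lemma regime_equilibrium_exp_stable ga gs e a s : 0 < ga -> 0 < gs -> 0 < e < 2 ->
  regime_equilibrium e a s -> exp_stable ga gs lam sig q (coalbedo Tsm Tsp bm bp) e a s.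
Proof.
  intros Hga Hgs He H. destruct (regime_equilibrium_poly e a s (proj1 He) H) as [HR [HFa HFs]].
  destruct (regime_open w Tsm Tsp s (proj2 H)) as [g [Hg Hreg]].
  apply (exp_stable_of_equilibrium _ _ _ _ _ _ (regime_coalbedo w bm bp) _ _ _ g); try assumption.
  intros y Hy; apply coalbedo_regime, Hreg; assumption.
Qed.

Lemma regime_branch e a s : 0 < e < 2 -> regime_equilibrium e a s ->
  exists r ua us, 0 < r /\ Rbar_le r (CV_radius ua) /\ Rbar_le r (CV_radius us) /\
    0 < us 1%nat /\ (1 < e -> 0 < ua 1%nat) /\
    forall h, Rabs h < r -> exists x y : R, is_pseries ua h x /\ is_pseries us h y /\
      regime_equilibrium (e + h) (a + x) (s + y).
Proof.
  intros He H. destruct (regime_equilibrium_poly e a s (proj1 He) H) as [HR [HFa HFs]].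
  assert (HD := jdet_pos lam sig e a s Hlam Hsig (proj1 He) (proj2 He) HR).
  destruct HR as [[Ha Has] _].
  destruct (regime_open w Tsm Tsp s (proj2 H)) as [g [Hg Hreg]].
  destruct (local_branch lam sig e a s (Rmin (a / 2) (g / 2)) ltac:(lra)
              ltac:(apply Rmin_pos; lra)) as [r [Hr [Ca [Cs Hbr]]]].
  destruct (branch_1 lam sig e a s) as [Hua1 Hus1].
  exists r, (branch_a lam sig e a s), (branch_s lam sig e a s).
  split; [exact Hr|]. split; [exact Ca|]. split; [exact Cs|]. split; [|split].
  - rewrite Hus1. apply Rmult_lt_0_compat; [apply Rinv_0_lt_compat, HD|].
    apply dTs_de_num_pos; lra.
  - intros He1. rewrite Hua1. apply Rmult_lt_0_compat; [apply Rinv_0_lt_compat, HD|].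
    apply dTa_de_num_pos; lra.
  - intros h Hh. destruct (Hbr h Hh) as [x [y [Hx [Hy [Hxd [Hyd [Ea Es]]]]]]].
    generalize (Rmin_l (a / 2) (g / 2)) (Rmin_r (a / 2) (g / 2)); intros Hda Hdg.
    apply Rabs_le_between in Hxd, Hyd.
    exists x, y; split; [exact Hx|]; split; [exact Hy|].
    apply regime_equilibrium_of_poly; [lra | lra | apply Hreg, Rabs_lt_between; lra | |].
    + rewrite Ea; exact HFa.
    + rewrite Es; exact HFs.
Qed.

Definition eq_choice (e : R) : R * R :=
  epsilon (inhabits (0, 0)) (fun p => regime_equilibrium e (fst p) (snd p)).

Lemma eq_choice_spec e a s : 0 < e < 2 -> regime_equilibrium e a s -> eq_choice e = (a, s).
Proof.
  intros He H.
  assert (Hex : exists p : R * R, regime_equilibrium e (fst p) (snd p)) by (exists (a, s); exact H).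
  destruct (regime_equilibrium_unique e _ _ a s He (epsilon_spec (inhabits (0, 0)) _ Hex) H)
    as [Ea Es].
  fold (eq_choice e) in Ea, Es. destruct (eq_choice e); simpl in *; subst; reflexivity.
Qed.

Lemma eq_choice_local e a s : 0 < e < 2 -> regime_equilibrium e a s ->
  exists r ua us, 0 < r /\ Rbar_le r (CV_radius ua) /\ Rbar_le r (CV_radius us) /\
    0 < us 1%nat /\ (1 < e -> 0 < ua 1%nat) /\
    forall z, Rabs (z - e) < r ->
      regime_equilibrium z (fst (eq_choice z)) (snd (eq_choice z)) /\
      is_pseries ua (z - e) (fst (eq_choice z) - a) /\
      is_pseries us (z - e) (snd (eq_choice z) - s).
Proof.
  intros He H. destruct (regime_branch e a s He H) as [r [ua [us [Hr [Ca [Cs [Hs1 [Ha1 Hbr]]]]]]]].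
  exists (Rmin r (Rmin e (2 - e))), ua, us.
  assert (Hrm : 0 < Rmin r (Rmin e (2 - e))) by (repeat apply Rmin_pos; lra).
  assert (Hrr : Rmin r (Rmin e (2 - e)) <= r) by apply Rmin_l.
  assert (Hre : Rmin r (Rmin e (2 - e)) <= Rmin e (2 - e)) by apply Rmin_r.
  split; [exact Hrm|].
  split; [eapply Rbar_le_trans; [|exact Ca]; simpl; exact Hrr|].
  split; [eapply Rbar_le_trans; [|exact Cs]; simpl; exact Hrr|].
  split; [exact Hs1|]. split; [exact Ha1|].
  intros z Hz. destruct (Hbr (z - e) ltac:(lra)) as [x [y [Hx [Hy Heq]]]].
  replace (e + (z - e)) with z in Heq by ring.
  assert (Hz2 : 0 < z < 2).
  { generalize (Rmin_l e (2 - e)) (Rmin_r e (2 - e)); apply Rabs_lt_between in Hz; lra. }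
  rewrite (eq_choice_spec z _ _ Hz2 Heq); simpl.
  replace (a + x - a) with x by ring. replace (s + y - s) with y by ring.
  split; [exact Heq | split; assumption].
Qed.

Lemma eq_choice_analytic_deriv e a s : 0 < e < 2 -> regime_equilibrium e a s ->
  analytic_at (fun z => fst (eq_choice z)) e /\ analytic_at (fun z => snd (eq_choice z)) e /\
  (exists l, is_derive (fun z => snd (eq_choice z)) e l /\ 0 < l) /\
  (1 < e -> exists l, is_derive (fun z => fst (eq_choice z)) e l /\ 0 < l).
Proof.
  intros He H.
  destruct (eq_choice_local e a s He H) as [r [ua [us [Hr [Ca [Cs [Hs1 [Ha1 Hloc]]]]]]]].
  assert (Hrep : forall z, Rabs (z - e) < r ->
            is_pseries ua (z - e) (fst (eq_choice z) - fst (eq_choice e)) /\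
            is_pseries us (z - e) (snd (eq_choice z) - snd (eq_choice e)))
    by (rewrite (eq_choice_spec e a s He H); intros z Hz; apply Hloc, Hz).
  split; [|split; [|split]].
  - apply (analytic_at_of_pseries ua _ _ r Hr); intros z Hz; apply Hrep, Hz.
  - apply (analytic_at_of_pseries us _ _ r Hr); intros z Hz; apply Hrep, Hz.
  - exists (us 1%nat); split; [|exact Hs1].
    apply (is_derive_of_pseries us _ _ r Hr Cs); intros z Hz; apply Hrep, Hz.
  - intros He1; exists (ua 1%nat); split; [|exact (Ha1 He1)].
    apply (is_derive_of_pseries ua _ _ r Hr Ca); intros z Hz; apply Hrep, Hz.
Qed.

Lemma eq_choice_near e0 a0 s0 : 0 < e0 < 2 -> regime_equilibrium e0 a0 s0 ->
  exists d, 0 < d /\ forall z, Rabs (z - e0) < d ->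
    0 < z < 2 /\ regime_equilibrium z (fst (eq_choice z)) (snd (eq_choice z)) /\ (1 < e0 -> 1 < z).
Proof.
  intros He H.
  destruct (eq_choice_local e0 a0 s0 He H) as [r [ua [us [Hr [_ [_ [_ [_ Hloc]]]]]]]].
  (* when [e0 > 1] the ball must also stay in [(1, 2)] *)
  set (c1 := if Rlt_dec 1 e0 then e0 - 1 else 1).
  assert (Hc1 : 0 < c1 /\ (1 < e0 -> c1 <= e0 - 1))
    by (unfold c1; destruct (Rlt_dec 1 e0); split; intros; lra).
  exists (Rmin (Rmin r c1) (Rmin e0 (2 - e0))). split; [repeat apply Rmin_pos; lra|].
  intros z Hz.
  assert (Hzr : Rabs (z - e0) < r /\ Rabs (z - e0) < c1).
  { split; (eapply Rlt_le_trans; [exact Hz | eapply Rle_trans; [apply Rmin_l | ]]);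
      [apply Rmin_l | apply Rmin_r]. }
  assert (Hze : Rabs (z - e0) < e0 /\ Rabs (z - e0) < 2 - e0).
  { split; (eapply Rlt_le_trans; [exact Hz | eapply Rle_trans; [apply Rmin_r | ]]);
      [apply Rmin_l | apply Rmin_r]. }
  destruct Hzr as [Hzr Hzc], Hze as [Hze1 Hze2]. apply Rabs_lt_between in Hzc, Hze1, Hze2.
  split; [lra|]. split; [apply Hloc, Hzr|].
  intros He1; generalize (proj2 Hc1 He1); lra.
Qed.

End Model.

Theorem proposition2p4
  (ga gs sig q Tsm Tsp bm bp lam : R)
  (Hga : 0 < ga) (Hgs : 0 < gs) (Hsig : 0 < sig) (Hq : 0 < q)
  (HTsm : 0 < Tsm) (HTs : Tsm < Tsp) (Hbm : 0 < bm) (Hb : bm < bp)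
  (Hlam : 0 <= lam)
  (w : bool) (eps0 Ta0 Ts0 : R) (Heps0 : 0 < eps0 < 2) :
  is_equilibrium lam sig q (coalbedo Tsm Tsp bm bp) eps0 Ta0 Ts0 ->
  regime w Tsm Tsp Ts0 ->
  exists (d : R) (fa fs : R -> R), 0 < d /\
    fa eps0 = Ta0 /\ fs eps0 = Ts0 /\
    (forall eps, Rabs (eps - eps0) < d -> 0 < eps < 2 ->
       is_equilibrium lam sig q (coalbedo Tsm Tsp bm bp) eps (fa eps) (fs eps) /\
       regime w Tsm Tsp (fs eps) /\
       (forall a s, is_equilibrium lam sig q (coalbedo Tsm Tsp bm bp) eps a s ->
          regime w Tsm Tsp s -> a = fa eps /\ s = fs eps) /\
       exp_stable ga gs lam sig q (coalbedo Tsm Tsp bm bp) eps (fa eps) (fs eps) /\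
       analytic_at fa eps /\ analytic_at fs eps) /\
    (forall e1 e2, Rabs (e1 - eps0) < d -> Rabs (e2 - eps0) < d ->
       0 < e1 -> e2 < 2 -> e1 < e2 -> fs e1 < fs e2) /\
    (1 < eps0 ->
     forall e1 e2, Rabs (e1 - eps0) < d -> Rabs (e2 - eps0) < d ->
       0 < e1 -> e2 < 2 -> e1 < e2 -> fa e1 < fa e2).
Proof.
  intros Heq Hreg.
  assert (H0 : regime_equilibrium sig q Tsm Tsp bm bp lam w eps0 Ta0 Ts0) by (split; assumption).
  pose proof (eq_choice_spec _ _ _ _ _ _ _ w Hsig Hq HTs Hbm Hb Hlam) as Hspec.
  pose proof (eq_choice_analytic_deriv _ _ _ _ _ _ _ w Hsig Hq HTs Hbm Hb Hlam) as Hloc.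
  destruct (eq_choice_near _ _ _ _ _ _ _ w Hsig Hq HTs Hbm Hb Hlam _ _ _ Heps0 H0)
    as [d [Hd Hnear]].
  set (fa := fun z => fst (eq_choice sig q Tsm Tsp bm bp lam w z)).
  set (fs := fun z => snd (eq_choice sig q Tsm Tsp bm bp lam w z)).
  exists d, fa, fs. split; [exact Hd|].
  split; [unfold fa; rewrite (Hspec _ _ _ Heps0 H0); reflexivity|].
  split; [unfold fs; rewrite (Hspec _ _ _ Heps0 H0); reflexivity|]. split; [|split].
  - intros eps Heps _. destruct (Hnear eps Heps) as [He [[Heq' Hreg'] _]].
    destruct (Hloc _ _ _ He (conj Heq' Hreg')) as [Ha [Hs _]].
    split; [exact Heq'|]. split; [exact Hreg'|]. split; [|split; [|split; assumption]].
    + intros a s Ha' Hs'. unfold fa, fs. rewrite (Hspec _ _ _ He (conj Ha' Hs')).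
      split; reflexivity.
    + exact (regime_equilibrium_exp_stable _ _ _ _ _ _ _ w Hsig Hq HTs Hbm Hb Hlam ga gs _ _ _
               Hga Hgs He (conj Heq' Hreg')).
  - intros e1 e2 H1 H2 _ _ H12. apply (increasing_of_is_derive_pos fs eps0 d); try assumption.
    intros z Hz. destruct (Hnear z Hz) as [He [HRE _]]. apply (Hloc _ _ _ He HRE).
  - intros He1 e1 e2 H1 H2 _ _ H12. apply (increasing_of_is_derive_pos fa eps0 d); try assumption.
    intros z Hz. destruct (Hnear z Hz) as [He [HRE Hz1]]. apply (Hloc _ _ _ He HRE), Hz1, He1.
Qed.
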